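(* Under the setup below, for every $1\le i\le n-1$ and $1\le j\le D_i$, put $r_i=(d_i/d_{i+1})^{1/D_i}$ and $\widetilde w_{i,j}=r_ia_i\exp\!\big(\pi\mathrm{i}\tfrac{2j-1}{D_i}\big)$. Then there is a critical point $w_{i,j}\in\mathbb{C}\setminus\{0\}$ of $f$, i.e. a solution of $$\sum_{k=1}^{n-1}\frac{(-1)^{n-k}D_kz^{D_k}}{z^{D_k}-a_k^{D_k}}+(-1)^nd_1=0,$$ with $|w_{i,j}-\widetilde w_{i,j}|<u^{2/K}|a_i|$. Moreover $w_{i_1,j_1}=w_{i_2,j_2}$ if and only if $(i_1,j_1)=(i_2,j_2)$.
   Context: Setup. Fix $p\in\{0,1\}$, $n\ge2$ and positive integers $d_1,\dots,d_n$ with $\xi:=\sum_{i=1}^n 1/d_i<1$; let $K=\max_i d_i$ and $D_i=d_i+d_{i+1}$ ($1\le i\le n-1$). If $p=1$: $0<s\le\min\{K^{-5\xi/(1-\xi)},K^{5-2K}\}$, $u=sK^{-5}$, $v=sK^{-2}$. If $p=0$: $0<s\le\min\{2^{-(1-\xi)^{-1}(1+1/d_n-2\xi/3)^{-1}},(4K)^{-3/(1-\xi)},K^{-2K(1+1/d_n+2(1-\xi)/3)^{-1}}\}$, $u=s^{1+1/d_n+2(1-\xi)/3}$, $v=s^{1/d_n+(1-\xi)/3}$. Let $a_1,\dots,a_{n-1}\in\mathbb{C}$ with $|a_{n-1}|=v^{1/d_n}$ and $|a_i|=u^{1/d_{i+1}}|a_{i+1}|$ for $1\le i\le n-2$. Let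 $f=f_{p,d_1,\dots,d_n}$, where $$f_{p,d_1,\dots,d_n}(z)=z^{(-1)^{n-p}d_1}\prod_{i=1}^{n-1}\big(z^{D_i}-a_i^{D_i}\big)^{(-1)^{n-i-p}}.$$ *)

From Stdlib Require Import Reals Lra.
Open Scope R_scope.

Record Cplx := mkC { Re : R; Im : R }.

Definition C0 : Cplx := mkC 0 0.
Definition RtoC (x : R) : Cplx := mkC x 0.
Definition Cadd (z w : Cplx) : Cplx := mkC (Re z + Re w) (Im z + Im w).
Definition Copp (z : Cplx) : Cplx := mkC (- Re z) (- Im z).
Definition Csub (z w : Cplx) : Cplx := Cadd z (Copp w).
Definition Cmul (z w : Cplx) : Cplx :=
  mkC (Re z * Re w - Im z * Im w) (Re z * Im w + Im z * Re w).
Definition Cinv (z : Cplx) : Cplx :=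
  mkC (Re z / (Re z ^ 2 + Im z ^ 2)) (- Im z / (Re z ^ 2 + Im z ^ 2)).
Definition Cdiv (z w : Cplx) : Cplx := Cmul z (Cinv w).
Fixpoint Cpow (z : Cplx) (k : nat) : Cplx :=
  match k with O => mkC 1 0 | S m => Cmul z (Cpow z m) end.
Definition Cmod (z : Cplx) : R := sqrt (Re z ^ 2 + Im z ^ 2).
Definition Cexpi (theta : R) : Cplx := mkC (cos theta) (sin theta).

Fixpoint sum1 (f : nat -> R) (m : nat) : R :=
  match m with O => 0 | S k => sum1 f k + f (S k) end.
Fixpoint Csum1 (f : nat -> Cplx) (m : nat) : Cplx :=
  match m with O => C0 | S k => Cadd (Csum1 f k) (f (S k)) end.
Fixpoint maxd (d : nat -> nat) (m : nat) : nat :=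
  match m with O => O | S k => Nat.max (maxd d k) (d (S k)) end.

Definition xi (d : nat -> nat) (n : nat) : R := sum1 (fun i => / INR (d i)) n.
Definition Kmax (d : nat -> nat) (n : nat) : nat := maxd d n.
Definition Dd (d : nat -> nat) (i : nat) : nat := (d i + d (S i))%nat.

Definition s_admissible (p : nat) (d : nat -> nat) (n : nat) (s : R) : Prop :=
  let K := INR (Kmax d n) in
  let x := xi d n in
  let dn := INR (d n) in
  0 < s /\
  (p = 1%nat ->
     s <= Rpower K (- (5 * x / (1 - x))) /\ s <= Rpower K (5 - 2 * K)) /\
  (p = 0%nat ->
     s <= Rpower 2 (- (/ (1 - x) * / (1 + / dn - 2 * x / 3))) /\
     s <= Rpower (4 * K) (- (3 / (1 - x))) /\
     s <= Rpower K (- (2 * K * / (1 + / dn + 2 * (1 - x) / 3)))).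

Definition u_par (p : nat) (d : nat -> nat) (n : nat) (s : R) : R :=
  let K := INR (Kmax d n) in
  let x := xi d n in
  let dn := INR (d n) in
  if Nat.eqb p 1 then s * Rpower K (-5)
  else Rpower s (1 + / dn + 2 * (1 - x) / 3).

Definition v_par (p : nat) (d : nat -> nat) (n : nat) (s : R) : R :=
  let K := INR (Kmax d n) in
  let x := xi d n in
  let dn := INR (d n) in
  if Nat.eqb p 1 then s * Rpower K (-2)
  else Rpower s (/ dn + (1 - x) / 3).

Definition crit_lhs (d : nat -> nat) (n : nat) (a : nat -> Cplx) (z : Cplx) : Cplx :=
  Cadd
    (Csum1 (fun k =>
       Cdiv (Cmul (RtoC ((-1) ^ (n - k) * INR (Dd d k))) (Cpow z (Dd d k)))
            (Csub (Cpow z (Dd d k)) (Cpow (a k) (Dd d k)))) (n - 1))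
    (RtoC ((-1) ^ n * INR (d 1%nat))).

(* z is a critical point of f in Cplx \ {0}: z nonzero, in the domain of f
   (no denominator vanishes), and solves the equation above *)
Definition is_crit (d : nat -> nat) (n : nat) (a : nat -> Cplx) (z : Cplx) : Prop :=
  z <> C0 /\
  (forall k, (1 <= k <= n - 1)%nat -> Cpow z (Dd d k) <> Cpow (a k) (Dd d k)) /\
  crit_lhs d n a z = C0.

Definition r_i (d : nat -> nat) (i : nat) : R :=
  Rpower (INR (d i) / INR (d (S i))) (/ INR (Dd d i)).
Definition wtilde (d : nat -> nat) (a : nat -> Cplx) (i j : nat) : Cplx :=
  Cmul (RtoC (r_i d i))
    (Cmul (a i) (Cexpi (PI * (2 * INR j - 1) / INR (Dd d i)))).

From Pilot Require Import Defs.
From Stdlib Require Import Reals.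
Open Scope R_scope.
From Stdlib Require Import Lra Lia ClassicalEpsilon.
From Coquelicot Require Coquelicot.

(* Fix (i, j) and put t = u^{1/K}.  The hypotheses give d_k >= 2, n < K,
   t <= K^{-2} and |a_k| <= t |a_l| for k < l.  Multiplying the critical-point
   equation by (-1)^{n-i} and telescoping the constants of the terms k < i, it
   becomes  D_i z^{D_i} / (z^{D_i} - a_i^{D_i}) - d_i + E(z) = 0,  where the
   error E collects the terms k <> i.  For E = 0 the solutions are the z with
   z^{D_i} = -(d_i/d_{i+1}) a_i^{D_i}, among them w0 = w~_{i,j}.  On the disk B
   of radius (3/4) t^2 |a_i| around w0 every term of E is O(K t^4), and the
   perturbed equation is the fixed-point equation of a Newton-type map T which
   maps B into itself and is a 1/4-contraction; Banach's theorem yields the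
   critical point w_{i,j} in B.  The disks B are pairwise disjoint (the radii
   r_i |a_i| grow by a factor of order 1/t with i, and for fixed i the angles
   of the w~_{i,j} differ by 2 pi / D_i), which gives the injectivity of w. *)

(* Two positive reals of the sizes arising in the perturbation argument:
   t is the small parameter and r = r_i is bounded above and below by K. *)
Section SmallParameters.
Variables (K t r : R).
Hypothesis hK : 3 <= K.
Hypothesis ht : 0 < t.
Hypothesis htK : t ^ 2 * K ^ 4 <= 1.
Hypothesis hr : 0 < r.
Hypothesis hr4 : 2 / K <= r ^ 4 <= K / 2.

(* Radius of the disk, relative to |a_i|. *)
Let dp := 3/4 * t ^ 2.

Lemma r_between : 2 / K <= r <= K / 2.
Proof.
  assert (0 < K) by lra.
  destruct (Rle_dec r 1).
  - split; [|lra].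
    assert (r ^ 4 <= r) by (assert (r^4 = r * r^3) by ring; assert (r^3 <= 1) by (assert (0 <= r^2) by nra; assert (r^2 <= 1) by nra; nra); nra).
    lra.
  - split.
    + assert (2 / K <= 1) by (apply (Rmult_le_reg_r K); [lra|]; unfold Rdiv; rewrite Rmult_assoc, Rinv_l; lra). lra.
    + assert (r <= r ^ 4) by (assert (r^4 = r * r^3) by ring; assert (1 <= r^3) by (assert (1 <= r^2) by nra; nra); nra).
      lra.
Qed.

Lemma radius_small : dp <= r / 72.
Proof.
  assert (h := r_between). unfold dp.
  assert (0 < K) by lra.
  assert (27 <= K ^ 3) by (assert (9 <= K^2) by nra; simpl; nra).
  assert (hr2 : 2 <= r * K) by (assert (2 / K * K = 2) by (field; lra); nra).
  assert (54 * t ^ 2 * K <= 2).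
  { assert (54 * t ^ 2 * K * K ^ 3 <= 54) by (replace (54 * t ^ 2 * K * K ^ 3) with (54 * (t ^ 2 * K ^ 4)) by ring; nra).
    assert (0 <= t ^ 2) by nra. nra. }
  nra.
Qed.

(* Ratios y with |a_k| / |z| <= y (k < i) resp. |z| / |a_k| <= y (k > i)
   for z in the disk; the term k of the error is then O(y^{D_k}). *)
Definition ratio_lo := t * (r + dp) / (r - dp) ^ 2.
Definition ratio_hi := t * (r + dp).

Lemma ratio_lo_pow4 : ratio_lo ^ 4 <= 3/5 * K * t ^ 4.
Proof.
  assert (hd := radius_small). assert (hdp : 0 <= dp) by (unfold dp; nra).
  assert (h := r_between).
  assert (h1 : (r + dp) ^ 4 <= (73/72) ^ 4 * r ^ 4).
  { rewrite <- Rpow_mult_distr. apply pow_incr. lra. }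
  assert (hr8 : 0 < r ^ 8) by (apply pow_lt; lra).
  assert (hrd : 0 < (r - dp) ^ 8) by (apply pow_lt; lra).
  unfold ratio_lo. unfold Rdiv. rewrite !Rpow_mult_distr, pow_inv, <- pow_mult. simpl (2*4)%nat.
  assert (0 < t ^ 4) by (apply pow_lt; lra).
  assert (hinv : / (r - dp) ^ 8 <= / ((71/72) ^ 8 * r ^ 8)).
  { apply Rinv_le_contravar. apply Rmult_lt_0_compat; [apply pow_lt; lra|auto].
    rewrite <- Rpow_mult_distr. apply pow_incr. lra. }
  assert (0 <= (r + dp) ^ 4) by (apply pow_le; lra).
  assert (step : t ^ 4 * (r + dp) ^ 4 * / (r - dp) ^ 8 <= t ^ 4 * ((73/72) ^ 4 * r ^ 4) * / ((71/72) ^ 8 * r ^ 8)).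
  { apply Rmult_le_compat; try nra. apply Rlt_le, Rinv_0_lt_compat; auto. }
  eapply Rle_trans. exact step.
  replace (t ^ 4 * ((73 / 72) ^ 4 * r ^ 4) * / ((71 / 72) ^ 8 * r ^ 8)) with
    (t ^ 4 * ((73 / 72) ^ 4 / (71 / 72) ^ 8) * / r ^ 4) by (field; repeat split; try (apply pow_nonzero); lra).
  assert (hr4' : / r ^ 4 <= K / 2).
  { assert (0 < r ^ 4) by (apply pow_lt; lra).
    replace (K / 2) with (/ (2 / K)) by (field; lra). apply Rinv_le_contravar; [|lra].
    apply Rdiv_lt_0_compat; lra. }
  assert (hc : (73 / 72) ^ 4 / (71 / 72) ^ 8 <= 6/5) by (simpl; lra).
  assert (0 < / r ^ 4) by (apply Rinv_0_lt_compat, pow_lt; lra).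
  assert (0 <= (73 / 72) ^ 4 / (71 / 72) ^ 8) by (simpl; lra).
  assert (t ^ 4 * ((73 / 72) ^ 4 / (71 / 72) ^ 8) * / r ^ 4 <= t ^ 4 * (6/5) * (K/2))
    by (apply Rmult_le_compat; nra).
  lra.
Qed.

Lemma ratio_hi_pow4 : ratio_hi ^ 4 <= 3/5 * K * t ^ 4.
Proof.
  assert (hd := radius_small). assert (hdp : 0 <= dp) by (unfold dp; nra).
  assert (h1 : (r + dp) ^ 4 <= (73/72) ^ 4 * r ^ 4).
  { rewrite <- Rpow_mult_distr. apply pow_incr. lra. }
  unfold ratio_hi. rewrite Rpow_mult_distr.
  assert (0 < t ^ 4) by (apply pow_lt; lra).
  assert (t ^ 4 * (r + dp) ^ 4 <= t ^ 4 * ((73/72) ^ 4 * (K / 2))).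
  { apply Rmult_le_compat_l; [lra|]. eapply Rle_trans; [exact h1|].
    apply Rmult_le_compat_l; [simpl; lra| lra]. }
  assert ((73/72)^4 <= 6/5) by (simpl; lra).
  nra.
Qed.

Lemma error_scale_small : 3/5 * K * t ^ 4 <= / K ^ 7 /\ 3/5 * K * t ^ 4 <= 1/3000.
Proof.
  assert (0 < K) by lra. assert (0 < K ^ 4) by (apply pow_lt; lra).
  assert (htK' : t ^ 2 <= / K ^ 4).
  { apply (Rmult_le_reg_r (K ^ 4)); auto. rewrite Rinv_l; lra. }
  assert (t ^ 4 = t ^ 2 * t ^ 2) by ring.
  assert (0 <= t ^ 2) by nra.
  assert (t ^ 4 <= / K ^ 4 * / K ^ 4) by (rewrite H1; apply Rmult_le_compat; auto).
  assert (hK7 : 3 ^ 7 <= K ^ 7) by (apply pow_incr; lra).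
  assert (0 < K ^ 7) by (apply pow_lt; lra).
  assert (e : / K ^ 4 * / K ^ 4 * K = / K ^ 7) by (field; lra).
  assert (3/5 * K * t ^ 4 <= 3/5 * / K ^ 7) by nra.
  assert (/ K ^ 7 <= / 3 ^ 7) by (apply Rinv_le_contravar; [simpl; lra|auto]).
  assert (0 < / K ^ 7) by (apply Rinv_0_lt_compat; auto).
  split; [lra|]. assert (/ 3 ^ 7 = 1/2187) by (simpl; field). lra.
Qed.

Lemma ratio_le_half (y : R) : 0 <= y -> y ^ 4 <= 3/5 * K * t ^ 4 -> y <= 1/2.
Proof.
  intros hy h. destruct error_scale_small as [_ h2].
  destruct (Rle_dec y (1/2)); auto.
  assert ((1/2) ^ 4 <= y ^ 4) by (apply pow_incr; lra). simpl in *. lra.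
Qed.

End SmallParameters.

Lemma sum1_ge_term (f : nat -> R) m j : (forall k, (1 <= k <= m)%nat -> 0 <= f k) ->
  (1 <= j <= m)%nat -> f j <= sum1 f m.
Proof.
  intros h hj. induction m; [lia|]. simpl.
  assert (0 <= f (S m)) by (apply h; lia).
  destruct (Nat.eq_dec j (S m)).
  - subst. assert (0 <= sum1 f m); [|lra].
    clear hj IHm. induction m; simpl; [lra|].
    assert (0 <= f (S m)) by (apply h; lia). assert (0 <= sum1 f m) by (apply IHm; intros; apply h; lia). lra.
  - assert (f j <= sum1 f m) by (apply IHm; [intros; apply h; lia| lia]). lra.
Qed.

Lemma sum1_ge_const (f : nat -> R) m c : (forall k, (1 <= k <= m)%nat -> c <= f k) ->
  INR m * c <= sum1 f m.
Proof.
  intros h. induction m; cbn [sum1]. simpl; lra.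
  assert (INR m * c <= sum1 f m) by (apply IHm; intros; apply h; lia).
  assert (c <= f (S m)) by (apply h; lia). rewrite S_INR. lra.
Qed.

Lemma maxd_ge (d : nat -> nat) m j : (1 <= j <= m)%nat -> (d j <= maxd d m)%nat.
Proof.
  intros hj. induction m; [lia|]. simpl.
  destruct (Nat.eq_dec j (S m)). subst; lia.
  assert (d j <= maxd d m)%nat by (apply IHm; lia). lia.
Qed.

Lemma Rpower_pos x y : 0 < Rpower x y.
Proof. unfold Rpower. apply exp_pos. Qed.

Lemma Rpower_lt1_anti (u a b : R) : 0 < u < 1 -> a <= b -> Rpower u b <= Rpower u a.
Proof.
  intros hu hab. unfold Rpower.
  assert (ln u < 0) by (rewrite <- ln_1; apply ln_increasing; lra).
  destruct (Req_dec (b * ln u) (a * ln u)) as [e|ne].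
  - rewrite e; lra.
  - left. apply exp_increasing. nra.
Qed.

Section Hypotheses.
Variables (p n : nat) (d : nat -> nat) (s : R).
Hypothesis hp : p = 0%nat \/ p = 1%nat.
Hypothesis hn : (2 <= n)%nat.
Hypothesis hd : forall i, (1 <= i <= n)%nat -> (0 < d i)%nat.
Hypothesis hxi : xi d n < 1.
Hypothesis hs : s_admissible p d n s.

Let K := Kmax d n.

(* xi < 1 forces every exponent to be at least 2. *)
Lemma exponent_ge2 k : (1 <= k <= n)%nat -> (2 <= d k)%nat.
Proof.
  intros hk. assert (h := sum1_ge_term (fun i => / INR (d i)) n k).
  assert (hpos : forall k, (1 <= k <= n)%nat -> 0 <= / INR (d k)).
  { intros k0 hk0. left. apply Rinv_0_lt_compat, lt_0_INR. auto. }
  specialize (h hpos hk). cbv beta in h. unfold xi in hxi.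
  assert (hdk := hd k hk).
  destruct (Nat.eq_dec (d k) 1) as [e|]; [|lia].
  rewrite e in h. simpl in h. lra.
Qed.

Lemma exponent_leK k : (1 <= k <= n)%nat -> (d k <= K)%nat.
Proof. intros; unfold K, Kmax; apply maxd_ge; auto. Qed.

(* n / K <= xi < 1, hence n < K. *)
Lemma n_ltK : (n < K)%nat.
Proof.
  assert (h2 := exponent_ge2 1 ltac:(lia)). assert (h3 := exponent_leK 1 ltac:(lia)).
  assert (hK : 0 < INR K) by (apply lt_0_INR; lia).
  assert (h' : INR n * / INR K <= xi d n).
  { apply sum1_ge_const. intros k hk. apply Rinv_le_contravar. apply lt_0_INR. apply hd; auto.
    apply le_INR. apply exponent_leK; auto. }
  assert (INR n < INR K).
  { apply (Rmult_lt_reg_r (/ INR K)). apply Rinv_0_lt_compat; auto. rewrite Rinv_r by lra. lra. }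
  apply INR_lt; auto.
Qed.

Lemma K_ge3 : 3 <= INR K.
Proof. assert (h := n_ltK). replace 3 with (INR 3) by (simpl; ring). apply le_INR. lia. Qed.

Lemma u_tiny : 0 < u_par p d n s /\ u_par p d n s <= Rpower (INR K) (- (2 * INR K)).
Proof.
  assert (hK := K_ge3). destruct hs as [hs0 [hs1 hs0']].
  unfold u_par. fold K. destruct hp as [e|e]; subst p.
  - simpl. destruct (hs0' eq_refl) as [_ [_ h3]]. fold K in h3.
    set (x := xi d n) in *. set (dn := INR (d n)) in *.
    assert (hdn : 0 < dn) by (unfold dn; apply lt_0_INR, hd; lia).
    set (e := 1 + / dn + 2 * (1 - x) / 3).
    assert (he : 0 < e) by (unfold e; assert (0 < / dn) by (apply Rinv_0_lt_compat; auto); lra).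
    split. apply Rpower_pos.
    eapply Rle_trans. apply Rle_Rpower_l. lra. split. auto. exact h3.
    rewrite Rpower_mult. right. f_equal. change (1 + / dn + 2 * (1 - x) / 3) with e. field. lra.
  - simpl. destruct (hs1 eq_refl) as [_ h2]. fold K in h2.
    split. apply Rmult_lt_0_compat; auto. apply Rpower_pos.
    eapply Rle_trans. apply Rmult_le_compat_r. left; apply Rpower_pos. exact h2.
    rewrite <- Rpower_plus. right. f_equal. ring.
Qed.

Let u := u_par p d n s.
Let t := Rpower u (/ INR K).

(* The small parameter t = u^{1/K}: t <= K^{-2}, and t^2 = u^{2/K} is the
   scale of the error bound in the theorem. *)
Lemma t_facts : 0 < t /\ t ^ 2 * INR K ^ 4 <= 1 /\ Rpower u (2 / INR K) = t ^ 2 /\ 0 < u < 1.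
Proof.
  assert (hK := K_ge3). destruct u_tiny as [hu0 hu1]. fold u in hu0, hu1.
  assert (hu : u < 1).
  { eapply Rle_lt_trans. exact hu1. rewrite <- (Rpower_O (INR K)) by lra. apply Rpower_lt; lra. }
  assert (ht0 : 0 < t) by apply Rpower_pos.
  assert (htle : t <= / INR K ^ 2).
  { unfold t. eapply Rle_trans. apply Rle_Rpower_l. left; apply Rinv_0_lt_compat; lra. split; eauto.
    rewrite Rpower_mult. replace (- (2 * INR K) * / INR K) with (- INR 2) by (simpl; field; lra).
    rewrite Rpower_Ropp, Rpower_pow by lra. lra. }
  split; auto. split.
  { assert (t ^ 2 <= (/ INR K ^ 2) ^ 2) by (apply pow_incr; lra).
    assert ((/ INR K ^ 2) ^ 2 * INR K ^ 4 = 1) by (field; lra).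
    assert (0 < INR K ^ 4) by (apply pow_lt; lra). nra. }
  split; [|lra].
  unfold t. rewrite <- Rpower_pow by apply Rpower_pos. rewrite Rpower_mult. f_equal. simpl. field. lra.
Qed.

Lemma u_root_le_t k : (1 <= k <= n)%nat -> Rpower u (/ INR (d k)) <= t.
Proof.
  intros hk. destruct t_facts as [_ [_ [_ hu]]].
  apply Rpower_lt1_anti; auto. apply Rinv_le_contravar. apply lt_0_INR, hd; auto.
  apply le_INR, exponent_leK; auto.
Qed.

Variable a : nat -> Cplx.
Hypothesis Ha1 : Cmod (a (n - 1)%nat) = Rpower (v_par p d n s) (/ INR (d n)).
Hypothesis Ha2 : forall i, (1 <= i <= n - 2)%nat ->
     Cmod (a i) = Rpower (u_par p d n s) (/ INR (d (S i))) * Cmod (a (S i)).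

Lemma modulus_pos k : (1 <= k <= n - 1)%nat -> 0 < Cmod (a k).
Proof.
  assert (H : forall m k, (k + m = n - 1)%nat -> (1 <= k)%nat -> 0 < Cmod (a k)).
  { induction m; intros k0 hk0 h1.
    - replace k0 with (n - 1)%nat by lia. rewrite Ha1. apply Rpower_pos.
    - rewrite Ha2 by lia. apply Rmult_lt_0_compat. apply Rpower_pos. apply IHm; lia. }
  intros hk. apply (H (n - 1 - k)%nat); lia.
Qed.

Lemma modulus_step k : (1 <= k <= n - 2)%nat -> Cmod (a k) <= t * Cmod (a (S k)).
Proof.
  intros hk. assert (h := u_root_le_t (S k) ltac:(lia)). fold u in Ha2.
  assert (hp0 := modulus_pos (S k) ltac:(lia)).
  rewrite Ha2 by lia. nra.
Qed.

Lemma modulus_gap k l : (1 <= k < l)%nat -> (l <= n - 1)%nat -> Cmod (a k) <= t * Cmod (a l).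
Proof.
  intros hkl hl. induction l; [lia|].
  destruct (Nat.eq_dec k l).
  - subst. apply modulus_step. lia.
  - assert (h1 := IHl ltac:(lia) ltac:(lia)).
    assert (h3 := modulus_step l ltac:(lia)).
    destruct t_facts as [ht0 [htK _]].
    assert (t <= 1).
    { assert (hK := K_ge3). assert (1 <= INR K ^ 4) by (apply pow_R1_Rle; lra). nra. }
    assert (0 < Cmod (a l)) by (apply modulus_pos; lia). nra.
Qed.

End Hypotheses.

Lemma sign_step n k : (k < n)%nat -> (-1) ^ (n - k) = - ((-1) ^ (n - S k)).
Proof. intros h. replace (n - k)%nat with (S (n - S k)) by lia. simpl. ring. Qed.

(* The constants of the terms k < i telescope, since D_k = d_k + d_{k+1}:
   sum_{k<i} (-1)^{n-k} D_k + (-1)^n d_1 = -(-1)^{n-i} d_i. *)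
Lemma telescope (n : nat) (d : nat -> nat) i : (1 <= i <= n)%nat ->
  sum1 (fun k => (-1) ^ (n - k) * INR (Dd d k)) (i - 1) + (-1) ^ n * INR (d 1%nat) =
  - ((-1) ^ (n - i) * INR (d i)).
Proof.
  intros hi. induction i; [lia|].
  destruct (Nat.eq_dec i 0).
  - subst. simpl sum1. assert (h := sign_step n 0 ltac:(lia)). rewrite Nat.sub_0_r in h.
    rewrite h. ring.
  - replace (S i - 1)%nat with (S (i - 1)) by lia. simpl sum1.
    replace (S (i - 1)) with i by lia.
    rewrite (Rplus_comm (sum1 _ (i - 1))), Rplus_assoc, IHi by lia.
    unfold Dd. rewrite plus_INR. rewrite (sign_step n i) by lia. ring.
Qed.

(* sin x >= x/2 on [0, 1], from the Taylor lower bound of the library. *)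
Lemma sin_ge_half x : 0 <= x <= 1 -> x / 2 <= sin x.
Proof.
  intros hx. assert (hs := SIN x ltac:(lra) ltac:(assert (h := PI2_3_2); lra)).
  destruct hs as [hs _]. eapply Rle_trans; [|exact hs].
  unfold sin_lb, sin_approx, sin_term. simpl.
  assert (0 <= x ^ 3 <= 1) by (split; [apply pow_le; lra| simpl; nra]).
  assert (x ^ 3 <= x) by (simpl; nra).
  assert (0 <= x ^ 5) by (apply pow_le; lra).
  assert (x ^ 7 <= x) by (replace (x ^ 7) with (x * (x^3 * x^3)) by ring; assert (x^3*x^3 <= 1) by nra; nra).
  simpl in *. lra.
Qed.

(* Two distinct angles pi (2j-1)/D, 1 <= j <= D, are at least 2pi/D apart
   (modulo 2pi); quantitatively 2 - 2 cos(difference) >= 9 / D^2. *)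
Lemma angle_separation (D j1 j2 : nat) : (4 <= D)%nat -> (1 <= j2)%nat -> (j2 < j1)%nat -> (j1 <= D)%nat ->
  9 / (INR D) ^ 2 <= 2 - 2 * cos (PI * (2 * INR j1 - 1) / INR D - PI * (2 * INR j2 - 1) / INR D).
Proof.
  intros hD h2 h21 h1.
  assert (hD' : 4 <= INR D) by (replace 4 with (INR 4) by (simpl; ring); apply le_INR; auto).
  assert (hPI : 3 < PI <= 4) by (split; [assert (h := PI2_3_2); lra| apply PI_4]).
  set (x := PI / INR D).
  assert (hx : 0 < x <= 1).
  { unfold x. split. apply Rdiv_lt_0_compat; lra.
    apply (Rmult_le_reg_r (INR D)). lra. unfold Rdiv. rewrite Rmult_assoc, Rinv_l by lra. lra. }
  set (m := (j1 - j2)%nat).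
  assert (e : PI * (2 * INR j1 - 1) / INR D - PI * (2 * INR j2 - 1) / INR D = 2 * INR m * x).
  { unfold m, x. rewrite minus_INR by lia. field. lra. }
  rewrite e.
  assert (hmR : 1 <= INR m <= INR D - 1).
  { split. replace 1 with (INR 1) by (simpl; ring). apply le_INR; unfold m; lia.
    replace (INR D - 1) with (INR (D - 1)) by (rewrite minus_INR by lia; simpl; ring). apply le_INR; unfold m; lia. }
  assert (hxD : x * INR D = PI) by (unfold x; field; lra).
  assert (hc : cos (2 * INR m * x) <= cos (2 * x)).
  { destruct (Rle_dec (2 * INR m * x) PI).
    - apply cos_decr_1; try nra.
    - replace (2 * INR m * x) with (- (2 * PI - 2 * INR m * x) + 2 * INR 1 * PI) by (simpl; ring).
      rewrite cos_period, cos_neg.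
      apply cos_decr_1; try nra. }
  rewrite cos_2a_sin in hc.
  assert (hsx := sin_ge_half x ltac:(lra)).
  assert (x / 2 >= 3 / (2 * INR D)).
  { unfold x. unfold Rdiv. apply Rle_ge. rewrite Rinv_mult.
    assert (0 < / INR D) by (apply Rinv_0_lt_compat; lra). nra. }
  assert (hsq : (3 / (2 * INR D)) ^ 2 <= sin x * sin x).
  { assert (0 < 3 / (2 * INR D)) by (apply Rdiv_lt_0_compat; lra). simpl. nra. }
  replace (9 / INR D ^ 2) with (4 * (3 / (2 * INR D)) ^ 2) by (field; lra).
  lra.
Qed.

Lemma choice_on_indices {A : Type} (Q : nat -> nat -> Prop) (P : nat -> nat -> A -> Prop) (x0 : A) :
  (forall i j, Q i j -> exists z, P i j z) -> exists w : nat -> nat -> A, forall i j, Q i j -> P i j (w i j).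
Proof.
  intros h.
  exists (fun i j => epsilon (inhabits x0) (fun z => Q i j -> P i j z)).
  intros i j hq. apply (epsilon_spec (inhabits x0) (fun z => Q i j -> P i j z)); auto.
  destruct (h i j hq) as [z hz]. exists z. auto.
Qed.

Module Analysis.
Import Coquelicot.Coquelicot.

Lemma le_eps_0 (a : R) : (forall eps, 0 < eps -> a <= eps) -> a <= 0.
Proof.
  intros H. destruct (Rle_dec a 0) as [h|h]; auto.
  assert (h2 := H (a/2) ltac:(lra)). lra.
Qed.

Lemma Cmod_le_abs (z : C) : Cmod z <= Rabs (fst z) + Rabs (snd z).
Proof.
  unfold Cmod. destruct z as [x y]; simpl.
  assert (0 <= Rabs x) by apply Rabs_pos. assert (0 <= Rabs y) by apply Rabs_pos.
  apply Rsqr_incr_0_var; [|lra].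
  rewrite Rsqr_sqrt by nra. unfold Rsqr.
  assert (Rabs x * Rabs x = x*x) by (rewrite <- Rabs_mult; apply Rabs_right; nra).
  assert (Rabs y * Rabs y = y*y) by (rewrite <- Rabs_mult; apply Rabs_right; nra).
  nra.
Qed.

Lemma Cmod_snd (z : C) : Rabs (snd z) <= Cmod z.
Proof.
  unfold Cmod. rewrite <- sqrt_Rsqr_abs. apply sqrt_le_1_alt.
  unfold Rsqr. destruct z; simpl. nra.
Qed.

Lemma Cmod_sub_sym (a b : C) : Cmod (a - b) = Cmod (b - a).
Proof. replace (a - b)%C with (- (b - a))%C by ring. apply Cmod_opp. Qed.

Lemma Cmod_tri3 (a b c : C) : Cmod (a - c) <= Cmod (a - b) + Cmod (b - c).
Proof. replace (a - c)%C with ((a - b) + (b - c))%C by ring. apply Cmod_triangle. Qed.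

Lemma Cmod_rev (a b : C) : Cmod a - Cmod b <= Cmod (a - b).
Proof.
  assert (h := Cmod_triangle (a - b) b). replace (a - b + b)%C with a in h by ring. lra.
Qed.

Lemma Cmod_div_le (x y : C) (X Y : R) : y <> 0%C -> Cmod x <= X -> 0 < Y -> Y <= Cmod y ->
  Cmod (x / y) <= X / Y.
Proof.
  intros hy hx hY hYy. rewrite Cmod_div by auto.
  assert (0 <= Cmod x) by apply Cmod_ge_0.
  unfold Rdiv. apply Rmult_le_compat; auto. left; apply Rinv_0_lt_compat.
  apply Cmod_gt_0; auto. apply Rinv_le_contravar; auto.
Qed.

Lemma RtoC_neq_0 (x : R) : x <> 0 -> RtoC x <> 0%C.
Proof. intros hx e. apply (f_equal fst) in e. simpl in e. lra. Qed.

Lemma Cmod_pos_neq_0 (z : C) (c : R) : 0 < c -> c <= Cmod z -> z <> 0%C.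
Proof. intros hc hz e. rewrite e, Cmod_0 in hz. lra. Qed.

Section FixedPoint.
Variables (T : C -> C) (w0 : C) (del q : R).
Hypothesis hq : 0 <= q < 1.
Hypothesis hdel : 0 <= del.
Hypothesis hmap : forall z, Cmod (z - w0) <= del -> Cmod (T z - w0) <= del.
Hypothesis hlip : forall z z', Cmod (z - w0) <= del -> Cmod (z' - w0) <= del ->
   Cmod (T z - T z') <= q * Cmod (z - z').

Fixpoint iterate (n : nat) : C := match n with O => w0 | S m => T (iterate m) end.

Lemma iterate_in_disk n : Cmod (iterate n - w0) <= del.
Proof.
  induction n; simpl.
  - replace (w0 - w0)%C with (RtoC 0) by ring. rewrite Cmod_0; lra.
  - apply hmap; auto.
Qed.

Let c0 := Cmod (iterate 1 - iterate 0).

Lemma iterate_step n : Cmod (iterate (S n) - iterate n) <= q ^ n * c0.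
Proof.
  induction n; simpl.
  - unfold c0; simpl; lra.
  - eapply Rle_trans. apply hlip; [apply (iterate_in_disk (S n)) | apply (iterate_in_disk n)].
    simpl in IHn. rewrite Rmult_assoc. apply Rmult_le_compat_l; lra.
Qed.

Lemma iterate_far n m : Cmod (iterate (n + m) - iterate n) <= q ^ n * c0 / (1 - q).
Proof.
  assert (hc : 0 <= c0) by apply Cmod_ge_0.
  assert (H : forall m, Cmod (iterate (n + m) - iterate n) <= q ^ n * c0 * (1 - q ^ m) / (1 - q)).
  { induction m0.
    - rewrite Nat.add_0_r. replace (iterate n - iterate n)%C with (RtoC 0) by ring.
      rewrite Cmod_0. simpl. unfold Rdiv. rewrite Rminus_diag, Rmult_0_r, Rmult_0_l. lra.
    - eapply Rle_trans. apply (Cmod_tri3 _ (iterate (n + m0))).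
      rewrite Nat.add_succ_r.
      eapply Rle_trans. apply Rplus_le_compat. apply iterate_step. apply IHm0.
      rewrite pow_add. simpl. apply Req_le. field. lra. }
  eapply Rle_trans. apply H.
  assert (0 <= q ^ m) by (apply pow_le; lra).
  assert (0 <= q ^ n) by (apply pow_le; lra).
  unfold Rdiv. apply Rmult_le_compat_r. left; apply Rinv_0_lt_compat; lra.
  rewrite <- (Rmult_1_r (q^n * c0)) at 2. apply Rmult_le_compat_l. nra. lra.
Qed.

Lemma iterate_cauchy : forall eps, 0 < eps -> exists N, forall n m, (n >= N)%nat -> (m >= N)%nat ->
   Cmod (iterate n - iterate m) < eps.
Proof.
  intros eps he.
  assert (hc : 0 <= c0) by apply Cmod_ge_0.
  destruct (pow_lt_1_zero q ltac:(rewrite Rabs_right; lra) (eps * (1 - q) / (c0 + 1))) as [N HN].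
  { apply Rdiv_lt_0_compat; nra. }
  exists N.
  assert (Hb : forall n m, (n >= N)%nat -> (m >= n)%nat -> Cmod (iterate m - iterate n) < eps).
  { intros a b ha hb. replace b with (a + (b - a))%nat by lia.
    eapply Rle_lt_trans. apply iterate_far.
    specialize (HN a ha). rewrite Rabs_right in HN by (apply Rle_ge, pow_le; lra).
    apply (Rmult_lt_compat_r (c0 + 1)) in HN; [|lra].
    unfold Rdiv in *.
    assert (0 <= q ^ a) by (apply pow_le; lra).
    apply (Rmult_lt_reg_r (1 - q)). lra.
    rewrite Rmult_assoc, Rinv_l by lra. rewrite Rmult_1_r.
    replace (eps * (1 - q) * / (c0 + 1) * (c0 + 1)) with (eps * (1 - q)) in HN by (field; lra).
    nra. }
  intros n m hn hm. destruct (Nat.le_gt_cases n m).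
  - rewrite Cmod_sub_sym. apply Hb; lia.
  - apply Hb; lia.
Qed.

(* By completeness of R (componentwise) the iterates converge. *)
Lemma iterate_converges : exists z, forall eps, 0 < eps ->
  exists N, forall n, (n >= N)%nat -> Cmod (z - iterate n) < eps.
Proof.
  assert (cre : Cauchy_crit (fun n => fst (iterate n))).
  { intros eps he. destruct (iterate_cauchy eps he) as [N HN]. exists N. intros n m hn hm.
    unfold Rdist. eapply Rle_lt_trans; [|apply (HN n m hn hm)].
    replace (fst (iterate n) - fst (iterate m)) with (fst (iterate n - iterate m)%C) by (simpl; ring).
    apply re_le_Cmod. }
  assert (cim : Cauchy_crit (fun n => snd (iterate n))).
  { intros eps he. destruct (iterate_cauchy eps he) as [N HN]. exists N. intros n m hn hm.
    unfold Rdist. eapply Rle_lt_trans; [|apply (HN n m hn hm)].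
    replace (snd (iterate n) - snd (iterate m)) with (snd (iterate n - iterate m)%C) by (simpl; ring).
    apply Cmod_snd. }
  destruct (Rcomplete.R_complete _ cre) as [lr Hr].
  destruct (Rcomplete.R_complete _ cim) as [li Hi].
  exists (lr, li). intros eps he.
  destruct (Hr (eps/2) ltac:(lra)) as [N1 H1].
  destruct (Hi (eps/2) ltac:(lra)) as [N2 H2].
  exists (N1 + N2)%nat. intros n hn.
  eapply Rle_lt_trans. apply Cmod_le_abs.
  specialize (H1 n ltac:(lia)). specialize (H2 n ltac:(lia)).
  unfold Rdist in *. simpl.
  rewrite Rabs_minus_sym in H1. rewrite Rabs_minus_sym in H2.
  replace (lr + - fst (iterate n)) with (lr - fst (iterate n)) by ring.
  replace (li + - snd (iterate n)) with (li - snd (iterate n)) by ring. lra.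
Qed.

Theorem fixpoint_exists : exists z, Cmod (z - w0) <= del /\ T z = z.
Proof.
  destruct iterate_converges as [z conv].
  assert (zin : Cmod (z - w0) <= del).
  { assert (h : Cmod (z - w0) - del <= 0); [|lra].
    apply le_eps_0. intros eps he. destruct (conv eps he) as [N HN].
    specialize (HN N (le_n _)).
    assert (h1 := Cmod_tri3 z (iterate N) w0). assert (h2 := iterate_in_disk N). lra. }
  exists z. split; auto.
  assert (h : Cmod (T z - z) <= 0).
  { apply le_eps_0. intros eps he. destruct (conv (eps/2) ltac:(lra)) as [N HN].
    assert (h1 := Cmod_tri3 (T z) (iterate (S N)) z).
    assert (h2 : Cmod (T z - iterate (S N)) <= q * Cmod (z - iterate N)).
    { simpl. apply hlip; auto. apply iterate_in_disk. }
    assert (h3 := HN N (le_n _)). assert (h4 := HN (S N) ltac:(lia)).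
    rewrite (Cmod_sub_sym (iterate (S N))) in h1.
    assert (0 <= Cmod (z - iterate N)) by apply Cmod_ge_0. nra. }
  assert (e : Cmod (T z - z) = 0) by (assert (0 <= Cmod (T z - z)) by apply Cmod_ge_0; lra).
  apply Cmod_eq_0 in e.
  replace (T z) with ((T z - z) + z)%C by ring. rewrite e. ring.
Qed.
End FixedPoint.
Lemma pow_le1 (x : R) n : 0 <= x <= 1 -> x ^ n <= 1.
Proof.
  intros h. induction n; simpl; [lra|]. assert (0 <= x ^ n) by (apply pow_le; lra). nra.
Qed.

Lemma pow_le_exp (x : R) m n : 0 <= x <= 1 -> (m <= n)%nat -> x ^ n <= x ^ m.
Proof.
  intros h hmn. replace n with (m + (n - m))%nat by lia. rewrite pow_add.
  assert (0 <= x ^ m) by (apply pow_le; lra). assert (x ^ (n - m) <= 1) by (apply pow_le1; lra).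
  assert (0 <= x ^ (n - m)) by (apply pow_le; lra). nra.
Qed.

Lemma Cpow_diff (z z' : C) (M : R) m :
  Cmod z <= M -> Cmod z' <= M ->
  Cmod (z ^ S m - z' ^ S m) <= INR (S m) * M ^ m * Cmod (z - z').
Proof.
  intros hz hz'. assert (hM : 0 <= M) by (assert (h := Cmod_ge_0 z); lra).
  induction m.
  - simpl. replace (z * 1 - z' * 1)%C with (z - z')%C by ring. lra.
  - replace (z ^ S (S m) - z' ^ S (S m))%C with (z * (z ^ S m - z' ^ S m) + (z - z') * z' ^ S m)%C
      by (rewrite !Cpow_S; ring).
    eapply Rle_trans. apply Cmod_triangle. rewrite !Cmod_mult, Cmod_pow.
    assert (0 <= Cmod (z ^ S m - z' ^ S m)) by apply Cmod_ge_0.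
    assert (0 <= Cmod (z - z')) by apply Cmod_ge_0.
    assert (Cmod z' ^ S m <= M ^ S m) by (apply pow_incr; split; [apply Cmod_ge_0|auto]).
    assert (h1 : Cmod z * Cmod (z ^ S m - z' ^ S m) <= M * (INR (S m) * M ^ m * Cmod (z - z'))).
    { apply Rmult_le_compat; auto. apply Cmod_ge_0. }
    replace (INR (S (S m)) * M ^ S m * Cmod (z - z')) with
      (M * (INR (S m) * M ^ m * Cmod (z - z')) + M ^ S m * Cmod (z - z'))
      by (rewrite (S_INR (S m)); change (M ^ S m) with (M * M ^ m); ring).
    assert (Cmod (z - z') * Cmod z' ^ S m <= M ^ S m * Cmod (z - z')) by nra.
    lra.
Qed.

Lemma pow_one_plus (b : C) (eta : R) N : Cmod b <= eta ->
  Cmod ((1 + b) ^ N - 1) <= (1 + eta) ^ N - 1.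
Proof.
  intros hb. assert (he : 0 <= eta) by (assert (h := Cmod_ge_0 b); lra).
  induction N.
  - simpl. replace (1 - 1)%C with (RtoC 0) by ring. rewrite Cmod_0. lra.
  - replace ((1 + b) ^ S N - 1)%C with ((1 + b) * ((1 + b) ^ N - 1) + b)%C by (rewrite !Cpow_S; ring).
    eapply Rle_trans. apply Cmod_triangle. rewrite Cmod_mult.
    assert (Cmod (1 + b) <= 1 + eta).
    { eapply Rle_trans. apply Cmod_triangle. rewrite Cmod_1. lra. }
    assert (0 <= Cmod ((1 + b) ^ N - 1)) by apply Cmod_ge_0.
    assert (Cmod (1 + b) * Cmod ((1 + b) ^ N - 1) <= (1 + eta) * ((1 + eta) ^ N - 1)).
    { apply Rmult_le_compat; auto; apply Cmod_ge_0. }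
    simpl. lra.
Qed.

Lemma pow_bernoulli_up (eta : R) N : 0 <= eta -> INR N * eta <= 1/2 ->
  (1 + eta) ^ N <= 1 + 2 * INR N * eta.
Proof.
  intros he hN.
  assert (H : forall N, (1 + eta) ^ N * (1 - INR N * eta) <= 1).
  { induction N0.
    - simpl. lra.
    - rewrite S_INR. simpl.
      assert (0 <= (1 + eta) ^ N0) by (apply pow_le; lra).
      assert ((1 + eta) * (1 - (INR N0 + 1) * eta) <= 1 - INR N0 * eta).
      { assert (0 <= INR N0) by apply pos_INR. nra. }
      nra. }
  specialize (H N). assert (0 <= INR N) by apply pos_INR.
  assert (0 < (1 + eta) ^ N) by (apply pow_lt; lra).
  set (x := INR N * eta) in *. set (P := (1 + eta) ^ N) in *.
  assert (0 <= x) by (unfold x; nra).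
  assert (1 <= (1 + 2 * x) * (1 - x)) by nra.
  replace (1 + 2 * INR N * eta) with (1 + 2 * x) by (unfold x; ring).
  assert (P * (1 - x) <= (1 + 2 * x) * (1 - x)) by lra.
  apply (Rmult_le_reg_r (1 - x)); lra.
Qed.

Lemma RN_bound (al be : C) (eta : R) N :
  Cmod al <= eta -> Cmod be <= eta ->
  Cmod (((1 + al) ^ N - (1 + be) ^ N) - RtoC (INR N) * (al - be)) <=
  Cmod (al - be) * INR N * ((1 + eta) ^ N - 1).
Proof.
  intros ha hb. assert (he : 0 <= eta) by (assert (h := Cmod_ge_0 al); lra).
  induction N.
  - simpl. replace (1 - 1 - 0 * (al - be))%C with (RtoC 0) by ring. rewrite Cmod_0. lra.
  - replace (((1 + al) ^ S N - (1 + be) ^ S N) - RtoC (INR (S N)) * (al - be))%C with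
      ((1 + al) * (((1 + al) ^ N - (1 + be) ^ N) - RtoC (INR N) * (al - be)) +
       (al - be) * (RtoC (INR N) * al + ((1 + be) ^ N - 1)))%C
      by (rewrite S_INR; simpl; rewrite RtoC_plus; ring).
    eapply Rle_trans. apply Cmod_triangle. rewrite !Cmod_mult.
    assert (h1 : Cmod (1 + al) <= 1 + eta).
    { eapply Rle_trans. apply Cmod_triangle. rewrite Cmod_1. lra. }
    assert (h2 : Cmod (RtoC (INR N) * al + ((1 + be) ^ N - 1)) <= INR N * eta + ((1 + eta) ^ N - 1)).
    { eapply Rle_trans. apply Cmod_triangle. rewrite Cmod_mult, Cmod_R, Rabs_right by (apply Rle_ge, pos_INR).
      assert (0 <= INR N) by apply pos_INR.
      assert (h := pow_one_plus be eta N hb).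
      assert (INR N * Cmod al <= INR N * eta) by (apply Rmult_le_compat_l; auto). lra. }
    assert (0 <= Cmod (al - be)) by apply Cmod_ge_0.
    set (X := Cmod (((1 + al) ^ N - (1 + be) ^ N) - RtoC (INR N) * (al - be))) in *.
    assert (0 <= X) by apply Cmod_ge_0.
    assert (h3 : Cmod (1 + al) * X <= (1 + eta) * (Cmod (al - be) * INR N * ((1 + eta) ^ N - 1))).
    { apply Rmult_le_compat; auto. apply Cmod_ge_0. }
    assert (h4 : Cmod (al - be) * Cmod (RtoC (INR N) * al + ((1 + be) ^ N - 1)) <=
                 Cmod (al - be) * (INR N * eta + ((1 + eta) ^ N - 1))).
    { apply Rmult_le_compat_l; auto. }
    rewrite S_INR.
    replace (Cmod (al - be) * (INR N + 1) * ((1 + eta) ^ S N - 1)) with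
      ((1 + eta) * (Cmod (al - be) * INR N * ((1 + eta) ^ N - 1)) +
       Cmod (al - be) * (INR N * eta + ((1 + eta) ^ N - 1)) +
       Cmod (al - be) * (eta * (1+eta)^N))%R by (change ((1+eta)^S N) with ((1+eta)*(1+eta)^N); ring).
    assert (0 <= (1 + eta) ^ N) by (apply pow_le; lra).
    assert (0 <= Cmod (al - be) * (eta * (1+eta)^N)).
    { apply Rmult_le_pos; auto. apply Rmult_le_pos; lra. }
    lra.
Qed.

Lemma Dpow_bound (x : R) D : (4 <= D)%nat -> 0 <= x <= 1/2 ->
  INR D * x ^ D <= 4 * x ^ 4 /\ INR D * INR D * x ^ D <= 16 * x ^ 4.
Proof.
  intros hD hx. induction hD.
  - simpl. lra.
  - destruct IHhD as [h1 h2]. rewrite S_INR. simpl.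
    assert (4 <= INR m) by (replace 4 with (INR 4) by (simpl; ring); apply le_INR; auto).
    assert (0 <= x ^ m) by (apply pow_le; lra).
    split.
    + assert ((INR m + 1) * x <= INR m) by nra. nra.
    + assert ((INR m + 1) * (INR m + 1) * x <= INR m * INR m) by nra. nra.
Qed.

Lemma pow_S_le_half (y : R) m' : 0 <= y <= 1/2 -> y ^ S m' <= 1/2.
Proof.
  intros hy. simpl. assert (y ^ m' <= 1) by (apply pow_le1; lra).
  assert (0 <= y ^ m') by (apply pow_le; lra). nra.
Qed.

(* A term m a^m / (z^m - a^m) with |a| much smaller than |z| (the terms
   k < i of the error): it is bounded by 2 m y^m and Lipschitz with constant
   4 m^2 y^m / zlo, where y bounds |a| M / zlo^2 and zlo <= |z| <= M. *)
Section TermLo.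
Variables (m' : nat) (a : C) (y zlo M : R).
Let m := S m'.
Hypothesis hzlo : 0 < zlo.
Hypothesis hy : 0 <= y <= 1/2.
Hypothesis haM : Cmod a * M <= y * zlo ^ 2.
Hypothesis hMz : zlo <= M.

Lemma lo_pow_small : Cmod a ^ m <= y ^ m * zlo ^ m.
Proof.
  rewrite <- Rpow_mult_distr. apply pow_incr. split. apply Cmod_ge_0.
  assert (0 <= Cmod a) by apply Cmod_ge_0.
  apply (Rmult_le_reg_r zlo); auto. simpl in haM. nra.
Qed.

Lemma lo_denominator (z : C) : zlo <= Cmod z -> Cmod z ^ m / 2 <= Cmod (z ^ m - a ^ m).
Proof.
  intros hz. eapply Rle_trans; [|apply Cmod_rev]. rewrite !Cmod_pow.
  assert (zlo ^ m <= Cmod z ^ m) by (apply pow_incr; lra).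
  assert (h := lo_pow_small). assert (h2 : y ^ m <= 1/2) by (apply pow_S_le_half; exact hy).
  assert (0 <= zlo ^ m) by (apply pow_le; lra).
  assert (y ^ m * zlo ^ m <= 1/2 * Cmod z ^ m) by (assert (0 <= y ^ m) by (apply pow_le; lra); nra).
  lra.
Qed.

Lemma lo_term_bound (z : C) : zlo <= Cmod z ->
  (z ^ m <> a ^ m)%C /\ Cmod (RtoC (INR m) * a ^ m / (z ^ m - a ^ m)) <= 2 * INR m * y ^ m.
Proof.
  intros hz. assert (hd := lo_denominator z hz).
  assert (hzm : 0 < Cmod z ^ m) by (apply pow_lt; lra).
  assert (hne : (z ^ m - a ^ m <> 0)%C).
  { intro e. rewrite e, Cmod_0 in hd. lra. }
  split. { intro e. apply hne. rewrite e. ring. }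
  eapply Rle_trans. apply (Cmod_div_le _ _ (INR m * (y ^ m * Cmod z ^ m)) (Cmod z ^ m / 2)); auto.
  - rewrite Cmod_mult, Cmod_R, Rabs_right by (apply Rle_ge, pos_INR).
    apply Rmult_le_compat_l. apply pos_INR. rewrite Cmod_pow.
    eapply Rle_trans. apply lo_pow_small. apply Rmult_le_compat_l. apply pow_le; lra.
    apply pow_incr; lra.
  - lra.
  - apply Req_le. field. lra.
Qed.

Lemma lo_pow_product : Cmod a ^ m * M ^ m' * zlo <= y ^ m * (zlo ^ m * zlo ^ m).
Proof.
  assert (h1 : (Cmod a * M) ^ m <= (y * zlo ^ 2) ^ m).
  { apply pow_incr. split; auto. apply Rmult_le_pos; [apply Cmod_ge_0|lra]. }
  rewrite !Rpow_mult_distr, <- pow_mult in h1.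
  replace (2 * m)%nat with (m + m)%nat in h1 by lia. rewrite pow_add in h1.
  assert (M ^ m' * zlo <= M ^ m) by (unfold m; simpl; assert (0 <= M ^ m') by (apply pow_le; lra); nra).
  assert (0 <= Cmod a ^ m) by (apply pow_le, Cmod_ge_0). nra.
Qed.

Lemma lo_term_lip (z z' : C) : zlo <= Cmod z <= M -> zlo <= Cmod z' <= M ->
  Cmod (RtoC (INR m) * a ^ m / (z ^ m - a ^ m) - RtoC (INR m) * a ^ m / (z' ^ m - a ^ m))
  <= 4 * INR m * INR m * y ^ m / zlo * Cmod (z - z').
Proof.
  intros hz hz'. assert (hd := lo_denominator z (proj1 hz)). assert (hd' := lo_denominator z' (proj1 hz')).
  assert (hzm : 0 < Cmod z ^ m) by (apply pow_lt; lra).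
  assert (hzm' : 0 < Cmod z' ^ m) by (apply pow_lt; lra).
  assert (hne : (z ^ m - a ^ m <> 0)%C). { intro e. rewrite e, Cmod_0 in hd. lra. }
  assert (hne' : (z' ^ m - a ^ m <> 0)%C). { intro e. rewrite e, Cmod_0 in hd'. lra. }
  replace (RtoC (INR m) * a ^ m / (z ^ m - a ^ m) - RtoC (INR m) * a ^ m / (z' ^ m - a ^ m))%C
    with (RtoC (INR m) * a ^ m * (z' ^ m - z ^ m) / ((z ^ m - a ^ m) * (z' ^ m - a ^ m)))%C
    by (field; auto).
  assert (hdiff := Cpow_diff z' z M m' (proj2 hz') (proj2 hz)).
  assert (hM0 : 0 < M) by lra.
  assert (hmpos : 0 < INR m) by (apply lt_0_INR; unfold m; lia).
  assert (hzl : 0 < zlo ^ m) by (apply pow_lt; lra).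
  eapply Rle_trans.
  apply (Cmod_div_le _ _ (INR m * Cmod a ^ m * (INR m * M ^ m' * Cmod (z - z')))
           ((zlo ^ m / 2) * (zlo ^ m / 2))).
  - apply Cmult_neq_0; auto.
  - rewrite !Cmod_mult, Cmod_R, Rabs_right by (apply Rle_ge, pos_INR). rewrite Cmod_pow.
    rewrite (Cmod_sub_sym z' z) in hdiff.
    apply Rmult_le_compat_l. apply Rmult_le_pos. lra. apply pow_le, Cmod_ge_0. exact hdiff.
  - nra.
  - rewrite Cmod_mult.
    assert (zlo ^ m <= Cmod z ^ m) by (apply pow_incr; lra).
    assert (zlo ^ m <= Cmod z' ^ m) by (apply pow_incr; lra).
    apply Rmult_le_compat; nra.
  - assert (key := lo_pow_product).
    assert (0 <= Cmod (z - z')) by apply Cmod_ge_0.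
    apply (Rmult_le_reg_r ((zlo ^ m / 2) * (zlo ^ m / 2))). nra.
    unfold Rdiv. rewrite Rmult_assoc, Rinv_l by nra. rewrite Rmult_1_r.
    replace (4 * INR m * INR m * y ^ m * / zlo * Cmod (z - z') * (zlo ^ m * / 2 * (zlo ^ m * / 2)))
      with (INR m * INR m * Cmod (z - z') * (y ^ m * (zlo ^ m * zlo ^ m)) * / zlo) by (field; lra).
    replace (INR m * Cmod a ^ m * (INR m * M ^ m' * Cmod (z - z'))) with
      (INR m * INR m * Cmod (z - z') * (Cmod a ^ m * M ^ m' * zlo) * / zlo) by (field; lra).
    apply Rmult_le_compat_r. left; apply Rinv_0_lt_compat; lra.
    apply Rmult_le_compat_l; auto. apply Rmult_le_pos; nra.
Qed.
End TermLo.

(* A term m z^m / (z^m - a^m) with |z| much smaller than |a| (the terms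
   k > i of the error), with y bounding M / |a|: the same estimates hold. *)
Section TermHi.
Variables (m' : nat) (a : C) (y zlo M : R).
Let m := S m'.
Hypothesis hzlo : 0 < zlo.
Hypothesis hy : 0 <= y <= 1/2.
Hypothesis haM : M <= y * Cmod a.
Hypothesis hMz : zlo <= M.

Lemma hi_pow_small : M ^ m <= y ^ m * Cmod a ^ m.
Proof.
  rewrite <- Rpow_mult_distr. apply pow_incr. lra.
Qed.

Lemma hi_a_pos : 0 < Cmod a.
Proof. assert (0 <= Cmod a) by apply Cmod_ge_0. destruct (Req_dec (Cmod a) 0); [|lra].
  rewrite H0 in haM. lra. Qed.

Lemma hi_denominator (z : C) : Cmod z <= M -> Cmod a ^ m / 2 <= Cmod (z ^ m - a ^ m).
Proof.
  intros hz. rewrite Cmod_sub_sym. eapply Rle_trans; [|apply Cmod_rev]. rewrite !Cmod_pow.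
  assert (Cmod z ^ m <= M ^ m) by (apply pow_incr; split; [apply Cmod_ge_0|lra]).
  assert (h := hi_pow_small). assert (h2 : y ^ m <= 1/2) by (apply pow_S_le_half; exact hy).
  assert (0 <= Cmod a ^ m) by (apply pow_le, Cmod_ge_0).
  assert (y ^ m * Cmod a ^ m <= 1/2 * Cmod a ^ m) by nra.
  lra.
Qed.

Lemma hi_term_bound (z : C) : Cmod z <= M ->
  (z ^ m <> a ^ m)%C /\ Cmod (RtoC (INR m) * z ^ m / (z ^ m - a ^ m)) <= 2 * INR m * y ^ m.
Proof.
  intros hz. assert (hd := hi_denominator z hz).
  assert (ha := hi_a_pos).
  assert (ham : 0 < Cmod a ^ m) by (apply pow_lt; lra).
  assert (hne : (z ^ m - a ^ m <> 0)%C).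
  { intro e. rewrite e, Cmod_0 in hd. lra. }
  split. { intro e. apply hne. rewrite e. ring. }
  eapply Rle_trans. apply (Cmod_div_le _ _ (INR m * (y ^ m * Cmod a ^ m)) (Cmod a ^ m / 2)); auto.
  - rewrite Cmod_mult, Cmod_R, Rabs_right by (apply Rle_ge, pos_INR).
    apply Rmult_le_compat_l. apply pos_INR. rewrite Cmod_pow.
    eapply Rle_trans; [|apply hi_pow_small]. apply pow_incr; split; [apply Cmod_ge_0|lra].
  - lra.
  - apply Req_le. field. lra.
Qed.

Lemma hi_term_lip (z z' : C) : zlo <= Cmod z <= M -> zlo <= Cmod z' <= M ->
  Cmod (RtoC (INR m) * z ^ m / (z ^ m - a ^ m) - RtoC (INR m) * z' ^ m / (z' ^ m - a ^ m))
  <= 4 * INR m * INR m * y ^ m / zlo * Cmod (z - z').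
Proof.
  intros hz hz'. assert (hd := hi_denominator z (proj2 hz)). assert (hd' := hi_denominator z' (proj2 hz')).
  assert (ha := hi_a_pos).
  assert (ham : 0 < Cmod a ^ m) by (apply pow_lt; lra).
  assert (hne : (z ^ m - a ^ m <> 0)%C). { intro e. rewrite e, Cmod_0 in hd. lra. }
  assert (hne' : (z' ^ m - a ^ m <> 0)%C). { intro e. rewrite e, Cmod_0 in hd'. lra. }
  replace (RtoC (INR m) * z ^ m / (z ^ m - a ^ m) - RtoC (INR m) * z' ^ m / (z' ^ m - a ^ m))%C
    with (RtoC (INR m) * a ^ m * (z' ^ m - z ^ m) / ((z ^ m - a ^ m) * (z' ^ m - a ^ m)))%C
    by (field; auto).
  assert (hdiff := Cpow_diff z' z M m' (proj2 hz') (proj2 hz)).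
  assert (hM0 : 0 < M) by lra.
  assert (hmpos : 0 < INR m) by (apply lt_0_INR; unfold m; lia).
  eapply Rle_trans.
  apply (Cmod_div_le _ _ (INR m * Cmod a ^ m * (INR m * M ^ m' * Cmod (z - z')))
           ((Cmod a ^ m / 2) * (Cmod a ^ m / 2))).
  - apply Cmult_neq_0; auto.
  - rewrite !Cmod_mult, Cmod_R, Rabs_right by (apply Rle_ge, pos_INR). rewrite Cmod_pow.
    rewrite (Cmod_sub_sym z' z) in hdiff.
    apply Rmult_le_compat_l. apply Rmult_le_pos. lra. apply pow_le, Cmod_ge_0. exact hdiff.
  - nra.
  - rewrite Cmod_mult. apply Rmult_le_compat; nra.
  - assert (key : M ^ m' * zlo <= y ^ m * Cmod a ^ m).
    { eapply Rle_trans; [|apply hi_pow_small]. unfold m; simpl.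
      assert (0 <= M ^ m') by (apply pow_le; lra). nra. }
    assert (0 <= Cmod (z - z')) by apply Cmod_ge_0.
    apply (Rmult_le_reg_r ((Cmod a ^ m / 2) * (Cmod a ^ m / 2))). nra.
    unfold Rdiv. rewrite Rmult_assoc, Rinv_l by nra. rewrite Rmult_1_r.
    replace (4 * INR m * INR m * y ^ m * / zlo * Cmod (z - z') * (Cmod a ^ m * / 2 * (Cmod a ^ m * / 2)))
      with (INR m * INR m * Cmod (z - z') * Cmod a ^ m * (y ^ m * Cmod a ^ m) * / zlo) by (field; lra).
    replace (INR m * Cmod a ^ m * (INR m * M ^ m' * Cmod (z - z'))) with
      (INR m * INR m * Cmod (z - z') * Cmod a ^ m * (M ^ m' * zlo) * / zlo) by (field; lra).
    apply Rmult_le_compat_r. left; apply Rinv_0_lt_compat; lra.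
    apply Rmult_le_compat_l; auto. apply Rmult_le_pos; [|lra]. apply Rmult_le_pos; nra.
Qed.
End TermHi.


Fixpoint CsumC (f : nat -> C) (n : nat) : C :=
  match n with O => 0%C | S k => (CsumC f k + f (S k))%C end.

Lemma CsumC_bound (f : nat -> C) (B : R) N :
  (forall k, (1 <= k <= N)%nat -> Cmod (f k) <= B) -> 0 <= B -> Cmod (CsumC f N) <= INR N * B.
Proof.
  intros h hB. induction N; cbn [CsumC].
  - rewrite Cmod_0. simpl. lra.
  - eapply Rle_trans. apply Cmod_triangle.
    assert (Cmod (CsumC f N) <= INR N * B) by (apply IHN; intros; apply h; lia).
    assert (Cmod (f (S N)) <= B) by (apply h; lia).
    rewrite S_INR. lra.
Qed.

Lemma CsumC_sub (f g : nat -> C) N : (CsumC f N - CsumC g N)%C = CsumC (fun k => f k - g k)%C N.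
Proof. induction N; simpl. ring. rewrite <- IHN. ring. Qed.

Lemma CsumC_ext (f g : nat -> C) N : (forall k, (1 <= k <= N)%nat -> f k = g k) -> CsumC f N = CsumC g N.
Proof. intros h. induction N; simpl; auto. rewrite IHN by (intros; apply h; lia). rewrite h by lia. auto. Qed.

Lemma CsumC_add (f g : nat -> C) N : (CsumC f N + CsumC g N)%C = CsumC (fun k => f k + g k)%C N.
Proof. induction N; simpl. ring. rewrite <- IHN. ring. Qed.

(* The equation of the theorem, for the
   index i, is  D z^D / (z^D - a_i^D) - e1 + E(z) = 0  with e1 = d_i,
   e2 = d_{i+1}, D = e1 + e2 and an error E = sum_{k <> i} sg_k G_k(z)
   whose terms are either m a_k^m / (z^m - a_k^m) (k < i) or
   m z^m / (z^m - a_k^m) (k > i), m = mm k.  The centre w0 solves the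
   unperturbed equation  w0^D = -(e1/e2) a_i^D,  |w0| = r rho with rho = |a_i|,
   and the a_k are far from the circle |z| = r rho (by the factor t). *)
Section Perturbation.
Variables (N i D : nat) (mm : nat -> nat) (aa : nat -> C) (sg : nat -> R)
          (e1 e2 K t rho r : R) (w0 : C).
Hypothesis hK : 3 <= K.
Hypothesis ht : 0 < t.
Hypothesis htK : t ^ 2 * K ^ 4 <= 1.
Hypothesis hN : INR N <= K.
Hypothesis hrho : 0 < rho.
Hypothesis hr : 0 < r.
Hypothesis hw0 : Cmod w0 = r * rho.
Hypothesis hr4 : 2 / K <= r ^ 4 <= K / 2.
Hypothesis hmm : forall k, (1 <= k <= N)%nat -> k <> i -> (4 <= mm k)%nat.
Hypothesis hlo : forall k, (1 <= k < i)%nat -> Cmod (aa k) <= t * rho.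
Hypothesis hhi : forall k, (i < k <= N)%nat -> rho <= t * Cmod (aa k).
Hypothesis hsg : forall k, Rabs (sg k) = 1.
Hypothesis hD : INR D = e1 + e2.
Hypothesis he1 : 2 <= e1.
Hypothesis he2 : 2 <= e2.
Hypothesis hDK : INR D <= 2 * K.
Hypothesis hw0D : (w0 ^ D = - RtoC (e1 / e2) * aa i ^ D)%C.

Definition term (k : nat) (z : C) : C :=
  if Nat.ltb k i then (RtoC (INR (mm k)) * aa k ^ mm k / (z ^ mm k - aa k ^ mm k))%C
  else (RtoC (INR (mm k)) * z ^ mm k / (z ^ mm k - aa k ^ mm k))%C.

Definition error (z : C) : C :=
  CsumC (fun k => if Nat.eqb k i then 0%C else (RtoC (sg k) * term k z)%C) N.

(* The equation is equivalent to (z/w0)^D = 1 + psi z. *)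
Definition psi (z : C) : C := (- error z * RtoC (INR D) / (RtoC e1 * (RtoC e2 + error z)))%C.

(* A Newton step for (z/w0)^D - 1 - psi z = 0, with the derivative frozen
   at the centre. *)
Definition newton_map (z : C) : C := (z - w0 * ((z / w0) ^ D - 1 - psi z) / RtoC (INR D))%C.

Let dp := 3/4 * t ^ 2.
Let del := dp * rho.
Let zlo := (r - dp) * rho.
Let Mx := (r + dp) * rho.
Let Y := 3/5 * K * t ^ 4.

Lemma scales : 2 / K <= r <= K / 2 /\ dp <= r / 72 /\ Y <= / K ^ 7 /\ Y <= 1/3000 /\ 0 < Y.
Proof.
  split. apply (r_between K r); auto.
  split. apply (radius_small K t r); auto.
  destruct (error_scale_small K t) as [h1 h2]; auto.
  split; auto. split; auto.
  unfold Y. assert (0 < t ^ 4) by (apply pow_lt; lra). nra.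
Qed.

Lemma KY_small : K * Y <= 1/729.
Proof.
  destruct scales as [_ [_ [hY1 _]]].
  assert (0 < K ^ 7) by (apply pow_lt; lra).
  assert (K * / K ^ 7 = / K ^ 6) by (field; lra).
  assert (3 ^ 6 <= K ^ 6) by (apply pow_incr; lra).
  assert (/ K ^ 6 <= / 3 ^ 6) by (apply Rinv_le_contravar; [simpl; lra|auto]).
  assert (/ 3 ^ 6 = 1/729) by (simpl; field).
  assert (K * Y <= K * / K ^ 7) by (apply Rmult_le_compat_l; lra).
  lra.
Qed.

Lemma disk_bounds (z : C) : Cmod (z - w0) <= del -> zlo <= Cmod z <= Mx.
Proof.
  intros h. unfold del, zlo, Mx in *.
  assert (h1 := Cmod_rev w0 z). rewrite Cmod_sub_sym in h1.
  assert (h2 := Cmod_triangle (z - w0) w0). replace (z - w0 + w0)%C with z in h2 by ring.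
  split; nra.
Qed.

Lemma zlo_pos : 0 < zlo.
Proof. destruct scales as [[hr1 _] [hd _]]. unfold zlo. apply Rmult_lt_0_compat; lra. Qed.

Lemma zlo_Mx : zlo <= Mx.
Proof. unfold zlo, Mx, dp. assert (0 <= t^2) by nra. nra. Qed.

Lemma term_constants (y : R) m c : (4 <= m)%nat -> 0 <= y <= 1/2 -> y ^ 4 <= Y -> 0 <= c ->
  2 * INR m * y ^ m <= 8 * Y /\
  4 * INR m * INR m * y ^ m / zlo * c <= 64 * Y / zlo * c.
Proof.
  intros hm hy hy4 hc. assert (hzl := zlo_pos).
  destruct (Dpow_bound y m hm hy) as [d1 d2].
  split; [lra|].
  apply Rmult_le_compat_r; auto. unfold Rdiv.
  apply Rmult_le_compat_r. left; apply Rinv_0_lt_compat; auto. nra.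
Qed.

Lemma ratio_lo_fits k : (1 <= k < i)%nat ->
  0 <= ratio_lo t r <= 1/2 /\ ratio_lo t r ^ 4 <= Y /\ Cmod (aa k) * Mx <= ratio_lo t r * zlo ^ 2.
Proof.
  intros hk. destruct scales as [[hr1 hr2] [hd _]].
  assert (ht2 : 0 <= t^2) by nra.
  assert (hy4 : ratio_lo t r ^ 4 <= Y) by (apply (ratio_lo_pow4 K t r); auto).
  assert (hy0 : 0 <= ratio_lo t r).
  { unfold ratio_lo. apply Rmult_le_pos. apply Rmult_le_pos; unfold dp in hd; lra.
    left; apply Rinv_0_lt_compat, pow_lt; unfold dp in hd; lra. }
  split; [split; [auto|apply (ratio_le_half K t hK htK _ hy0 hy4)]|split; auto].
  unfold ratio_lo, Mx, zlo. fold dp.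
  assert (h := hlo k hk).
  assert (0 < (r - dp) ^ 2) by (apply pow_lt; lra).
  replace (t * (r + dp) / (r - dp) ^ 2 * ((r - dp) * rho) ^ 2) with (t * rho * ((r + dp) * rho))
    by (field; lra).
  assert (0 <= (r + dp) * rho) by (apply Rmult_le_pos; unfold dp; nra). apply Rmult_le_compat_r; auto.
Qed.

Lemma ratio_hi_fits k : (i < k <= N)%nat ->
  0 <= ratio_hi t r <= 1/2 /\ ratio_hi t r ^ 4 <= Y /\ Mx <= ratio_hi t r * Cmod (aa k).
Proof.
  intros hk. destruct scales as [[hr1 hr2] [hd _]].
  assert (ht2 : 0 <= t^2) by nra.
  assert (hy4 : ratio_hi t r ^ 4 <= Y) by (apply (ratio_hi_pow4 K t r); auto).
  assert (hy0 : 0 <= ratio_hi t r) by (unfold ratio_hi; apply Rmult_le_pos; [lra|]; unfold dp; nra).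
  split; [split; [auto|apply (ratio_le_half K t hK htK _ hy0 hy4)]|split; auto].
  unfold ratio_hi, Mx. fold dp.
  assert (h := hhi k hk).
  assert (0 <= r + dp) by (unfold dp; nra). nra.
Qed.

Lemma term_bound (k : nat) (z z' : C) : (1 <= k <= N)%nat -> k <> i ->
  Cmod (z - w0) <= del -> Cmod (z' - w0) <= del ->
  (z ^ mm k <> aa k ^ mm k)%C /\ Cmod (term k z) <= 8 * Y /\
  Cmod (term k z - term k z') <= 64 * Y / zlo * Cmod (z - z').
Proof.
  intros hk hki hz hz'.
  assert (hb := disk_bounds z hz). assert (hb' := disk_bounds z' hz').
  assert (hzl := zlo_pos). assert (hzM := zlo_Mx).
  assert (hm := hmm k hk hki).
  assert (hc := Cmod_ge_0 (z - z')).
  unfold term. destruct (Nat.ltb k i) eqn:hlt.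
  - apply Nat.ltb_lt in hlt.
    destruct (ratio_lo_fits k ltac:(lia)) as [hy [hy4 haM]].
    destruct (term_constants _ _ _ hm hy hy4 hc) as [c1 c2].
    destruct (mm k) as [|m'] eqn:Hm; [lia|].
    destruct (lo_term_bound m' (aa k) _ zlo Mx hzl hy haM hzM z (proj1 hb)) as [hne hG].
    assert (hL := lo_term_lip m' (aa k) _ zlo Mx hzl hy haM hzM z z' hb hb').
    repeat split; auto; lra.
  - apply Nat.ltb_ge in hlt.
    destruct (ratio_hi_fits k ltac:(lia)) as [hy [hy4 haM]].
    destruct (term_constants _ _ _ hm hy hy4 hc) as [c1 c2].
    destruct (mm k) as [|m'] eqn:Hm; [lia|].
    destruct (hi_term_bound m' (aa k) _ zlo Mx hzl hy haM hzM z (proj2 hb)) as [hne hG].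
    assert (hL := hi_term_lip m' (aa k) _ zlo Mx hzl hy haM hzM z z' hb hb').
    repeat split; auto; lra.
Qed.
Let eps := 8 * K * Y.

Lemma eps_facts : 0 < eps /\ eps <= 1/50 /\ eps = 24/5 * K^2 * t^4.
Proof.
  destruct scales as [_ [_ [_ [_ hY3]]]]. assert (h := KY_small). unfold eps.
  split. nra. split; [lra|unfold Y; field].
Qed.

Lemma error_bound (z : C) : Cmod (z - w0) <= del -> Cmod (error z) <= eps.
Proof.
  intros hz. destruct scales as [_ [_ [hY1 [hY2 hY3]]]].
  unfold error. eapply Rle_trans. apply (CsumC_bound _ (8 * Y)).
  - intros k hk. destruct (Nat.eqb k i) eqn:e.
    + rewrite Cmod_0. lra.
    + apply Nat.eqb_neq in e. rewrite Cmod_mult, Cmod_R, hsg, Rmult_1_l.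
      apply (term_bound k z z); auto.
  - lra.
  - unfold eps. nra.
Qed.

Lemma error_lip (z z' : C) : Cmod (z - w0) <= del -> Cmod (z' - w0) <= del ->
  Cmod (error z - error z') <= K * (64 * Y / zlo) * Cmod (z - z').
Proof.
  intros hz hz'. destruct scales as [_ [_ [hY1 [hY2 hY3]]]]. assert (hzl := zlo_pos).
  unfold error. rewrite CsumC_sub.
  assert (0 <= 64 * Y / zlo * Cmod (z - z')).
  { apply Rmult_le_pos; [|apply Cmod_ge_0]. apply Rmult_le_pos; [lra|]. left; apply Rinv_0_lt_compat; auto. }
  eapply Rle_trans. apply (CsumC_bound _ (64 * Y / zlo * Cmod (z - z'))).
  - intros k hk. destruct (Nat.eqb k i) eqn:e.
    + replace (0 - 0)%C with (RtoC 0) by ring. rewrite Cmod_0. auto.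
    + apply Nat.eqb_neq in e.
      replace (RtoC (sg k) * term k z - RtoC (sg k) * term k z')%C with (RtoC (sg k) * (term k z - term k z'))%C by ring.
      rewrite Cmod_mult, Cmod_R, hsg, Rmult_1_l.
      apply (term_bound k z z'); auto.
  - auto.
  - rewrite <- Rmult_assoc. apply Rmult_le_compat_r; [apply Cmod_ge_0|].
    apply Rmult_le_compat_r; auto. apply Rmult_le_pos; [lra|]. left; apply Rinv_0_lt_compat; auto.
Qed.

Lemma denominator_bound (z : C) : Cmod (z - w0) <= del -> e2 - eps <= Cmod (RtoC e2 + error z) /\ (RtoC e2 + error z <> 0)%C.
Proof.
  intros hz. assert (h := error_bound z hz). destruct eps_facts as [h1 [h2 _]].
  assert (h3 : e2 - eps <= Cmod (RtoC e2 + error z)).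
  { replace (RtoC e2 + error z)%C with (RtoC e2 - (- error z))%C by ring.
    eapply Rle_trans; [|apply Cmod_rev]. rewrite Cmod_R, Cmod_opp, Rabs_right by lra. lra. }
  split; auto. intro e. rewrite e, Cmod_0 in h3. lra.
Qed.

Lemma psi_bound (z : C) : Cmod (z - w0) <= del -> Cmod (psi z) <= INR D * eps / (e1 * (e2 - eps)).
Proof.
  intros hz. destruct (denominator_bound z hz) as [hd hne]. assert (h := error_bound z hz).
  destruct eps_facts as [h1 [h2 _]].
  unfold psi. apply Cmod_div_le.
  - apply Cmult_neq_0; auto. apply RtoC_neq_0; lra.
  - rewrite Cmod_mult, Cmod_opp, Cmod_R, Rabs_right by (apply Rle_ge, pos_INR).
    rewrite Rmult_comm. apply Rmult_le_compat_l; auto. apply pos_INR.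
  - apply Rmult_lt_0_compat; lra.
  - rewrite Cmod_mult, Cmod_R, Rabs_right by lra. apply Rmult_le_compat_l; lra.
Qed.

Lemma psi_lip (z z' : C) : Cmod (z - w0) <= del -> Cmod (z' - w0) <= del ->
  Cmod (psi z - psi z') <= INR D / e1 * Cmod (error z - error z').
Proof.
  intros hz hz'. destruct (denominator_bound z hz) as [hd hne]. destruct (denominator_bound z' hz') as [hd' hne'].
  destruct eps_facts as [h1 [h2 _]].
  assert (he1' : RtoC e1 <> 0%C) by (apply RtoC_neq_0; lra).
  unfold psi.
  replace (- error z * RtoC (INR D) / (RtoC e1 * (RtoC e2 + error z)) - - error z' * RtoC (INR D) / (RtoC e1 * (RtoC e2 + error z')))%C
    with (- RtoC (INR D / e1) * (RtoC e2 * (error z - error z') / ((RtoC e2 + error z) * (RtoC e2 + error z'))))%C.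
  2:{ rewrite RtoC_div by lra. field. repeat split; auto. }
  rewrite Cmod_mult, Cmod_opp, Cmod_R, Rabs_right.
  2:{ apply Rle_ge. apply Rmult_le_pos. apply pos_INR. left; apply Rinv_0_lt_compat; lra. }
  rewrite <- (Rmult_1_r (INR D / e1 * Cmod (error z - error z'))). rewrite Rmult_assoc.
  apply Rmult_le_compat_l. apply Rmult_le_pos. apply pos_INR. left; apply Rinv_0_lt_compat; lra.
  assert (hp : 0 < (e2 - eps) * (e2 - eps)) by nra.
  eapply Rle_trans. apply (Cmod_div_le _ _ (e2 * Cmod (error z - error z')) ((e2 - eps) * (e2 - eps))).
  - apply Cmult_neq_0; auto.
  - rewrite Cmod_mult, Cmod_R, Rabs_right by lra. lra.
  - auto.
  - rewrite Cmod_mult. apply Rmult_le_compat; lra.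
  - assert (0 <= Cmod (error z - error z')) by apply Cmod_ge_0.
    assert (e2 <= (e2 - eps) * (e2 - eps)) by nra.
    apply (Rmult_le_reg_r ((e2 - eps) * (e2 - eps))); auto.
    unfold Rdiv. rewrite Rmult_assoc, Rinv_l by lra. nra.
Qed.

Lemma w0_neq_0 : w0 <> 0%C.
Proof. intro e. rewrite e, Cmod_0 in hw0. nra. Qed.

Lemma RD_neq_0 : RtoC (INR D) <> 0%C.
Proof. apply RtoC_neq_0. lra. Qed.

Let eta := dp / r.

Lemma alpha_bound (z : C) : Cmod (z - w0) <= del -> Cmod (z / w0 - 1) <= eta.
Proof.
  intros hz. assert (hw := w0_neq_0).
  replace (z / w0 - 1)%C with ((z - w0) / w0)%C by (field; auto).
  rewrite Cmod_div by auto. rewrite hw0. unfold eta, del in *.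
  apply (Rmult_le_reg_r (r * rho)). nra. unfold Rdiv. rewrite Rmult_assoc, Rinv_l by nra.
  replace (dp * / r * (r * rho)) with (dp * rho) by (field; lra). lra.
Qed.

(* D eta <= 1/12, so the D-th power map is almost linear on the disk. *)
Lemma eta_facts : 0 <= eta /\ INR D * eta <= 1/12.
Proof.
  destruct scales as [[hr1 hr2] _]. unfold eta, dp.
  assert (0 <= t ^ 2) by nra. split. apply Rmult_le_pos; [nra|left; apply Rinv_0_lt_compat; lra].
  assert (0 < K) by lra.
  assert (/ r <= K / 2).
  { replace (K / 2) with (/ (2 / K)) by (field; lra). apply Rinv_le_contravar; auto. apply Rdiv_lt_0_compat; lra. }
  assert (t ^ 2 * K ^ 2 <= / 9).
  { assert (t ^ 2 * K ^ 2 * K ^ 2 <= 1) by (replace (t ^ 2 * K ^ 2 * K ^ 2) with (t ^ 2 * K ^ 4) by ring; auto).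
    assert (9 <= K ^ 2) by nra. assert (0 <= t ^ 2 * K ^ 2) by nra.
    apply (Rmult_le_reg_r 9). lra. rewrite Rinv_l by lra. nra. }
  assert (0 <= INR D) by apply pos_INR.
  assert (hir : 0 < / r) by (apply Rinv_0_lt_compat; lra).
  assert (e : INR D * (3 / 4 * t ^ 2 / r) = 3/4 * (INR D * (t ^ 2 * / r))) by (field; lra).
  assert (h5 : t ^ 2 * / r <= t ^ 2 * (K / 2)) by (apply Rmult_le_compat_l; lra).
  assert (h6 : INR D * (t ^ 2 * / r) <= 2 * K * (t ^ 2 * (K / 2))).
  { apply Rmult_le_compat; try lra. apply Rmult_le_pos; lra. }
  rewrite e.
  nra.
Qed.

(* The linear part of the newton map cancels the linearisation of the
   D-th power, leaving a second-order remainder and the variation of psi. *)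
Lemma newton_map_sub (z z' : C) :
  (newton_map z - newton_map z' =
   - w0 * ((((z / w0) ^ D - (z' / w0) ^ D) - RtoC (INR D) * (z / w0 - z' / w0)) / RtoC (INR D)) +
   w0 * (psi z - psi z') / RtoC (INR D))%C.
Proof.
  assert (hw := w0_neq_0). assert (hDn := RD_neq_0).
  unfold newton_map. field. auto.
Qed.

Lemma power_remainder_bound (z z' : C) : Cmod (z - w0) <= del -> Cmod (z' - w0) <= del ->
  Cmod (- w0 * ((((z / w0) ^ D - (z' / w0) ^ D) - RtoC (INR D) * (z / w0 - z' / w0)) / RtoC (INR D)))
  <= 1/6 * Cmod (z - z').
Proof.
  intros hz hz'. assert (hw := w0_neq_0). assert (hDn := RD_neq_0).
  set (al := (z / w0 - 1)%C). set (be := (z' / w0 - 1)%C).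
  assert (ha := alpha_bound z hz). assert (hb := alpha_bound z' hz').
  fold al in ha. fold be in hb.
  destruct eta_facts as [he0 heD].
  replace (z / w0)%C with (1 + al)%C by (unfold al; ring).
  replace (z' / w0)%C with (1 + be)%C by (unfold be; ring).
  replace (1 + al - (1 + be))%C with (al - be)%C by ring.
  assert (hab : Cmod w0 * Cmod (al - be) = Cmod (z - z')).
  { rewrite <- Cmod_mult. f_equal. unfold al, be. field. auto. }
  assert (hRN := RN_bound al be eta D ha hb).
  assert (hbern := pow_bernoulli_up eta D he0 ltac:(lra)).
  assert (hD0 : 0 < INR D) by (rewrite hD; lra).
  rewrite Cmod_mult, Cmod_opp, Cmod_div, Cmod_R, Rabs_right by (auto; lra).
  assert (0 <= Cmod (al - be)) by apply Cmod_ge_0.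
  assert (0 <= Cmod w0) by apply Cmod_ge_0.
  set (X := Cmod (((1 + al) ^ D - (1 + be) ^ D) - RtoC (INR D) * (al - be))) in *.
  assert (X / INR D <= Cmod (al - be) * (2 * INR D * eta)).
  { apply (Rmult_le_reg_r (INR D)); auto. unfold Rdiv. rewrite Rmult_assoc, Rinv_l by lra.
    assert (INR D * ((1 + eta) ^ D - 1) <= INR D * (2 * INR D * eta)) by (apply Rmult_le_compat_l; lra).
    nra. }
  assert (Cmod w0 * (X / INR D) <= Cmod w0 * (Cmod (al - be) * (2 * INR D * eta))) by (apply Rmult_le_compat_l; auto).
  assert (0 <= Cmod w0 * Cmod (al - be)) by nra.
  nra.
Qed.

Lemma psi_lip_scaled (z z' : C) : Cmod (z - w0) <= del -> Cmod (z' - w0) <= del ->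
  Cmod (psi z - psi z') / INR D <= / 2 * (K * (64 * Y / zlo) * Cmod (z - z')).
Proof.
  intros hz hz'. assert (hp := psi_lip z z' hz hz'). assert (hE := error_lip z z' hz hz').
  destruct scales as [_ [_ [_ [_ hY3]]]]. assert (hzl := zlo_pos).
  assert (hD0 : 0 < INR D) by (rewrite hD; lra).
  assert (0 <= Cmod (error z - error z')) by apply Cmod_ge_0.
  assert (0 <= Cmod (z - z')) by apply Cmod_ge_0.
  apply (Rmult_le_reg_r (INR D)); auto. unfold Rdiv. rewrite Rmult_assoc, Rinv_l by lra.
  rewrite Rmult_1_r. eapply Rle_trans. apply hp.
  assert (hDe : INR D / e1 <= INR D / 2).
  { unfold Rdiv. apply Rmult_le_compat_l; [lra|]. apply Rinv_le_contravar; lra. }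
  assert (0 <= INR D / e1) by (apply Rmult_le_pos; [lra|left; apply Rinv_0_lt_compat; lra]).
  assert (0 <= K * (64 * Y / zlo) * Cmod (z - z')).
  { apply Rmult_le_pos; auto. apply Rmult_le_pos; [lra|]. apply Rmult_le_pos; [lra|].
    left; apply Rinv_0_lt_compat; auto. }
  eapply Rle_trans. apply Rmult_le_compat_l. auto. exact hE.
  eapply Rle_trans. apply Rmult_le_compat_r. 2: exact hDe. auto.
  right. field. lra.
Qed.

Lemma psi_part_bound (z z' : C) : Cmod (z - w0) <= del -> Cmod (z' - w0) <= del ->
  Cmod (w0 * (psi z - psi z') / RtoC (INR D)) <= 1/12 * Cmod (z - z').
Proof.
  intros hz hz'. assert (hDn := RD_neq_0).
  assert (hD0 : 0 < INR D) by (rewrite hD; lra).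
  rewrite Cmod_div, Cmod_mult, Cmod_R, Rabs_right by (auto; lra).
  assert (h := psi_lip_scaled z z' hz hz').
  destruct scales as [[hr1 hr2] [hd [_ [_ hY3]]]].
  assert (0 <= Cmod (z - z')) by apply Cmod_ge_0.
  assert (0 <= Cmod w0) by apply Cmod_ge_0.
  unfold Rdiv. rewrite Rmult_assoc. fold (Cmod (psi z - psi z') / INR D).
  eapply Rle_trans. apply Rmult_le_compat_l. auto. exact h.
  rewrite hw0. unfold zlo.
  replace (r * rho * (/ 2 * (K * (64 * Y / ((r - dp) * rho)) * Cmod (z - z')))) with
     (32 * (K * Y) * (r / (r - dp)) * Cmod (z - z')) by (field; split; lra).
  apply Rmult_le_compat_r; auto.
  assert (r / (r - dp) <= 72/71).
  { apply (Rmult_le_reg_r (r - dp)). lra. unfold Rdiv. rewrite Rmult_assoc, Rinv_l by lra. lra. }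
  assert (hKY := KY_small).
  assert (0 <= K * Y) by nra.
  assert (0 <= r / (r - dp)) by (apply Rmult_le_pos; [lra|left; apply Rinv_0_lt_compat; lra]).
  assert (K * Y * (r / (r - dp)) <= 1/729 * (72/71)) by (apply Rmult_le_compat; lra).
  nra.
Qed.

Lemma newton_map_contraction (z z' : C) : Cmod (z - w0) <= del -> Cmod (z' - w0) <= del ->
  Cmod (newton_map z - newton_map z') <= 1/4 * Cmod (z - z').
Proof.
  intros hz hz'. rewrite newton_map_sub.
  eapply Rle_trans. apply Cmod_triangle.
  assert (h1 := power_remainder_bound z z' hz hz').
  assert (h2 := psi_part_bound z z' hz hz'). lra.
Qed.

Lemma newton_map_centre : Cmod (newton_map w0 - w0) <= 3/4 * del.
Proof.
  assert (hw := w0_neq_0). assert (hDn := RD_neq_0).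
  assert (hz0 : Cmod (w0 - w0) <= del).
  { replace (w0 - w0)%C with (RtoC 0) by ring. rewrite Cmod_0. unfold del, dp. assert (0 <= t^2) by nra. nra. }
  replace (newton_map w0 - w0)%C with (w0 * psi w0 / RtoC (INR D))%C.
  2:{ unfold newton_map. replace (w0 / w0)%C with (RtoC 1) by (field; auto).
      rewrite Cpow_1_l. field. auto. }
  rewrite Cmod_div, Cmod_mult, Cmod_R, Rabs_right by (auto; rewrite hD; lra).
  assert (hp := psi_bound w0 hz0).
  destruct eps_facts as [he1' [he2' he3']].
  destruct scales as [[hr1 hr2] [hd [hY1 [hY2 hY3]]]].
  assert (hD0 : 0 < INR D) by (rewrite hD; lra).
  assert (Cmod (psi w0) / INR D <= eps / 3).
  { apply (Rmult_le_reg_r (INR D)); auto. unfold Rdiv. rewrite Rmult_assoc, Rinv_l by lra.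
    rewrite Rmult_1_r. eapply Rle_trans. exact hp.
    assert (3 <= e1 * (e2 - eps)) by nra.
    apply Rle_trans with (INR D * eps / 3).
    { unfold Rdiv. apply Rmult_le_compat_l; [nra|]. apply Rinv_le_contravar; lra. }
    right. field. }
  unfold Rdiv. rewrite Rmult_assoc. fold (Cmod (psi w0) / INR D).
  rewrite hw0.
  assert (0 <= Cmod (psi w0) / INR D) by (apply Rmult_le_pos; [apply Cmod_ge_0|left; apply Rinv_0_lt_compat; lra]).
  assert (r * rho * (Cmod (psi w0) / INR D) <= r * rho * (eps / 3)) by (apply Rmult_le_compat_l; nra).
  eapply Rle_trans. eauto.
  rewrite he3'. unfold del, dp.
  assert (hK3 : K ^ 3 * t ^ 2 <= / 3).
  { assert (K ^ 3 * t ^ 2 * K <= 1) by (replace (K ^ 3 * t ^ 2 * K) with (t ^ 2 * K ^ 4) by ring; auto).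
    assert (0 <= K ^ 3 * t ^ 2) by (assert (0 <= K^3) by (apply pow_le; lra); nra).
    apply (Rmult_le_reg_r 3). lra. rewrite Rinv_l by lra. nra. }
  assert (0 <= t ^ 2) by nra.
  assert (r * (24 / 5 * K ^ 2 * t ^ 4 / 3) <= K / 2 * (24 / 5 * K ^ 2 * t ^ 4 / 3)).
  { apply Rmult_le_compat_r; [|lra]. assert (0 <= t ^ 4) by (apply pow_le; lra). nra. }
  assert (K / 2 * (24 / 5 * K ^ 2 * t ^ 4 / 3) = 4/5 * (K ^ 3 * t ^ 2) * t ^ 2) by (field; lra).
  assert (4/5 * (K ^ 3 * t ^ 2) * t ^ 2 <= 4/5 * / 3 * t ^ 2) by nra.
  assert (r * rho * (24 / 5 * K ^ 2 * t ^ 4 / 3) = rho * (r * (24 / 5 * K ^ 2 * t ^ 4 / 3))) by ring.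
  nra.
Qed.

(* A fixed point of the newton map solves the perturbed equation: with
   c = a_i^D and E = E(z) one gets z^D (e2 + E) = - c (e1 - E). *)
Lemma fixed_point_solves (z : C) : Cmod (z - w0) <= del -> newton_map z = z ->
  (z ^ D <> aa i ^ D)%C /\
  (RtoC (INR D) * z ^ D / (z ^ D - aa i ^ D) - RtoC e1 + error z = 0)%C.
Proof.
  intros hz hT. assert (hw := w0_neq_0). assert (hDn := RD_neq_0).
  destruct (denominator_bound z hz) as [_ hne].
  assert (he1' : RtoC e1 <> 0%C) by (apply RtoC_neq_0; lra).
  assert (he2' : RtoC e2 <> 0%C) by (apply RtoC_neq_0; lra).
  assert (hfp : ((z / w0) ^ D - 1 - psi z = 0)%C).
  { replace ((z / w0) ^ D - 1 - psi z)%C with ((z - newton_map z) * RtoC (INR D) / w0)%C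
      by (unfold newton_map; field; auto).
    rewrite hT. field. auto. }
  assert (hzD : (z ^ D = w0 ^ D * (1 + psi z))%C).
  { replace (1 + psi z)%C with ((z / w0) ^ D)%C
      by (replace ((z / w0) ^ D)%C with (((z / w0) ^ D - 1 - psi z) + 1 + psi z)%C by ring;
          rewrite hfp; ring).
    unfold Cdiv. rewrite Cpow_mult_l, Cpow_inv by auto. field. apply Cpow_nz; auto. }
  set (c := (aa i ^ D)%C) in *.
  assert (hc : c <> 0%C).
  { intro e. assert (h0 : Cmod (w0 ^ D) = 0) by (rewrite hw0D, e; rewrite Cmult_0_r; apply Cmod_0).
    rewrite Cmod_pow, hw0 in h0. assert (0 < (r * rho) ^ D) by (apply pow_lt; nra). lra. }
  set (E := error z) in *.
  assert (hkey : (z ^ D * (RtoC e2 + E) = - c * (RtoC e1 - E))%C).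
  { rewrite hzD, hw0D. unfold psi. fold E. rewrite RtoC_div by lra.
    replace (RtoC (INR D)) with (RtoC e1 + RtoC e2)%C by (rewrite hD, RtoC_plus; auto).
    field. repeat split; auto. }
  assert (hne2 : (z ^ D - c <> 0)%C).
  { intro e. replace (z ^ D)%C with c in hkey by (replace (z ^ D)%C with (z ^ D - c + c)%C by ring; rewrite e; ring).
    apply (Cmult_neq_0 c (RtoC e1 + RtoC e2)); auto.
    - rewrite <- RtoC_plus. apply RtoC_neq_0. lra.
    - replace (c * (RtoC e1 + RtoC e2))%C with (c * (RtoC e2 + E) + c * (RtoC e1 - E))%C by ring.
      rewrite hkey. ring. }
  split.
  - intro e. apply hne2. rewrite e. ring.
  - replace (RtoC (INR D) * z ^ D / (z ^ D - c) - RtoC e1 + E)%C with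
      ((z ^ D * (RtoC e2 + E) + c * (RtoC e1 - E)) / (z ^ D - c))%C
      by (rewrite hD, RtoC_plus; field; auto).
    rewrite hkey. field. auto.
Qed.

Theorem perturbed_root : exists z, (Cmod (z - w0) <= 3/4 * t ^ 2 * rho) /\ (z <> 0%C) /\
  (forall k, (1 <= k <= N)%nat -> k <> i -> (z ^ mm k <> aa k ^ mm k)%C) /\
  (z ^ D <> aa i ^ D)%C /\
  (RtoC (INR D) * z ^ D / (z ^ D - aa i ^ D) - RtoC e1 + error z = 0)%C.
Proof.
  assert (hdel : 0 <= del) by (unfold del, dp; assert (0 <= t^2) by nra; nra).
  assert (hc0 : Cmod (w0 - w0) <= del) by (replace (w0 - w0)%C with (RtoC 0) by ring; rewrite Cmod_0; auto).
  destruct (fixpoint_exists newton_map w0 del (1/4) ltac:(lra) hdel) as [z [hz hT]].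
  - intros z hz. eapply Rle_trans. apply (Cmod_tri3 _ (newton_map w0)).
    assert (h1 := newton_map_contraction z w0 hz hc0).
    assert (h2 := newton_map_centre). lra.
  - apply newton_map_contraction.
  - exists z. split; [unfold del, dp in hz; lra|].
    assert (hb := disk_bounds z hz). assert (hzl := zlo_pos).
    split; [apply (Cmod_pos_neq_0 z zlo); lra|].
    split; [intros k hk hki; apply (term_bound k z z); auto|].
    apply fixed_point_solves; auto.
Qed.

End Perturbation.


Definition toC (z : Defs.Cplx) : C := (Defs.Re z, Defs.Im z).
Definition ofC (z : C) : Defs.Cplx := Defs.mkC (fst z) (snd z).

Lemma toC_ofC z : toC (ofC z) = z. Proof. destruct z; reflexivity. Qed.
Lemma toC_inj z w : toC z = toC w -> z = w.
Proof. destruct z, w; unfold toC; simpl; intros h; inversion h; subst; reflexivity. Qed.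
Lemma toC_add z w : toC (Defs.Cadd z w) = (toC z + toC w)%C. Proof. reflexivity. Qed.
Lemma toC_sub z w : toC (Defs.Csub z w) = (toC z - toC w)%C. Proof. reflexivity. Qed.
Lemma toC_mul z w : toC (Defs.Cmul z w) = (toC z * toC w)%C. Proof. reflexivity. Qed.
Lemma toC_div z w : toC (Defs.Cdiv z w) = (toC z / toC w)%C. Proof. reflexivity. Qed.
Lemma toC_RtoC x : toC (Defs.RtoC x) = RtoC x. Proof. reflexivity. Qed.
Lemma toC_pow z n : toC (Defs.Cpow z n) = (toC z ^ n)%C.
Proof. induction n; simpl. reflexivity. rewrite toC_mul, IHn. reflexivity. Qed.
Lemma toC_mod z : Defs.Cmod z = Cmod (toC z). Proof. reflexivity. Qed.
Lemma toC_expi th : toC (Defs.Cexpi th) = (cos th, sin th). Proof. reflexivity. Qed.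
Lemma toC_sum f m : toC (Defs.Csum1 f m) = CsumC (fun k => toC (f k)) m.
Proof. induction m; simpl. reflexivity. rewrite toC_add, IHm. reflexivity. Qed.

Lemma cexp_pow th m : (((cos th, sin th) : C) ^ m)%C = ((cos (INR m * th), sin (INR m * th)) : C).
Proof.
  induction m.
  - simpl. rewrite Rmult_0_l, cos_0, sin_0. reflexivity.
  - rewrite Cpow_S, IHm, S_INR.
    replace ((INR m + 1) * th) with (th + INR m * th) by ring.
    rewrite cos_plus, sin_plus. unfold Cmult. simpl. f_equal; ring.
Qed.

Lemma Cmod_cexp th : Cmod ((cos th, sin th) : C) = 1.
Proof.
  unfold Cmod. simpl. assert (h := sin2_cos2 th). unfold Rsqr in h.
  replace (cos th * (cos th * 1) + sin th * (sin th * 1)) with 1 by lra. apply sqrt_1.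
Qed.

Lemma cexp_dist th1 th2 : Cmod (((cos th1, sin th1) : C) - (cos th2, sin th2)) ^ 2 = 2 - 2 * cos (th1 - th2).
Proof.
  rewrite Cmod2_alt. simpl. rewrite cos_minus.
  assert (h1 := sin2_cos2 th1). assert (h2 := sin2_cos2 th2). unfold Rsqr in *. nra.
Qed.

Lemma CsumC_scal (c : C) f N : (c * CsumC f N)%C = CsumC (fun k => c * f k)%C N.
Proof. induction N; simpl. ring. rewrite <- IHN. ring. Qed.

Lemma sum_ind_lt (c : nat -> R) i M :
  sum1 (fun k => if Nat.ltb k i then c k else 0) M = sum1 c (Nat.min M (i - 1)).
Proof.
  induction M. reflexivity.
  cbn [sum1]. rewrite IHM. destruct (Nat.ltb (S M) i) eqn:e.
  - apply Nat.ltb_lt in e. rewrite (Nat.min_l M), (Nat.min_l (S M)) by lia. reflexivity.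
  - apply Nat.ltb_ge in e. rewrite (Nat.min_r (S M)), (Nat.min_r M) by lia. ring.
Qed.


(* The critical-point equation seen from the index i: multiplied by
   (-1)^{n-i}, its left-hand side is the left-hand side of the perturbed
   equation of [Perturbation] with e1 = d_i, mm = D and signs
   sg k = (-1)^{n-k} (-1)^{n-i}. *)
Section Decomposition.
Variables (n i : nat) (d : nat -> nat) (aa : nat -> C).
Hypothesis hi : (1 <= i <= n - 1)%nat.
Let sgn := (-1) ^ (n - i).
Let sg := fun k => (-1) ^ (n - k) * (-1) ^ (n - i).

Let summand (z : C) (k : nat) : C :=
  (RtoC ((-1) ^ (n - k) * INR (Dd d k)) * z ^ Dd d k / (z ^ Dd d k - aa k ^ Dd d k))%C.

(* The summands with k < i contribute a constant plus a small term. *)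
Let head (z : C) (k : nat) : C :=
  if Nat.ltb k i then RtoC ((-1) ^ (n - k) * INR (Dd d k))
  else if Nat.eqb k i then summand z k else 0%C.

Lemma sign_rescale k : sgn * sg k = (-1) ^ (n - k).
Proof.
  unfold sg, sgn.
  replace ((-1) ^ (n - i) * ((-1) ^ (n - k) * (-1) ^ (n - i))) with
    ((-1) ^ (n - k) * ((-1) ^ (n - i) * (-1) ^ (n - i))) by ring.
  rewrite <- Rpow_mult_distr. replace (-1 * -1) with 1 by ring. rewrite pow1. ring.
Qed.

Lemma summand_split (z : C) k : (1 <= k <= n - 1)%nat -> k <> i ->
  (z ^ Dd d k <> aa k ^ Dd d k)%C ->
  summand z k = (head z k + RtoC sgn * (RtoC (sg k) * term i (Dd d) aa k z))%C.
Proof.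
  intros hk hki hz.
  assert (hz' : (z ^ Dd d k - aa k ^ Dd d k <> 0)%C).
  { intro e. apply hz. replace (z ^ Dd d k)%C with (z ^ Dd d k - aa k ^ Dd d k + aa k ^ Dd d k)%C by ring.
    rewrite e. ring. }
  unfold head, term. rewrite Cmult_assoc, <- RtoC_mult, sign_rescale.
  destruct (Nat.eqb k i) eqn:e2; [apply Nat.eqb_eq in e2; lia|].
  unfold summand. destruct (Nat.ltb k i); rewrite !RtoC_mult.
  - field. auto.
  - unfold Cdiv. ring.
Qed.

Lemma head_sum (z : C) M : CsumC (head z) M =
  ((if Nat.leb i M then summand z i else 0) +
   RtoC (sum1 (fun k => if Nat.ltb k i then ((-1) ^ (n - k) * INR (Dd d k))%R else 0%R) M))%C.
Proof.
  induction M.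
  - simpl. destruct (Nat.leb i 0) eqn:e; [apply Nat.leb_le in e; lia|]. ring.
  - cbn [CsumC sum1]. rewrite IHM. unfold head.
    destruct (Nat.ltb (S M) i) eqn:e1.
    + apply Nat.ltb_lt in e1.
      destruct (Nat.leb i M) eqn:e3; [apply Nat.leb_le in e3; lia|].
      destruct (Nat.leb i (S M)) eqn:e4; [apply Nat.leb_le in e4; lia|].
      rewrite RtoC_plus. ring.
    + apply Nat.ltb_ge in e1. destruct (Nat.eqb (S M) i) eqn:e2.
      * apply Nat.eqb_eq in e2. subst i.
        destruct (Nat.leb (S M) M) eqn:e3; [apply Nat.leb_le in e3; lia|].
        rewrite Nat.leb_refl, Rplus_0_r. ring.
      * apply Nat.eqb_neq in e2.
        destruct (Nat.leb i M) eqn:e3; [|apply Nat.leb_gt in e3; lia].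
        destruct (Nat.leb i (S M)) eqn:e4; [|apply Nat.leb_gt in e4; lia].
        rewrite Rplus_0_r. ring.
Qed.

Lemma decomposition (z : C) :
  (forall k, (1 <= k <= n - 1)%nat -> k <> i -> (z ^ Dd d k <> aa k ^ Dd d k)%C) ->
  (CsumC (summand z) (n - 1) + RtoC ((-1) ^ n * INR (d 1%nat)))%C =
  (RtoC sgn * (RtoC (INR (Dd d i)) * z ^ Dd d i / (z ^ Dd d i - aa i ^ Dd d i) - RtoC (INR (d i))
     + error (n - 1) i (Dd d) aa sg z))%C.
Proof.
  intros hne.
  assert (h1 : CsumC (summand z) (n - 1) =
     (CsumC (head z) (n - 1) + RtoC sgn * error (n - 1) i (Dd d) aa sg z)%C).
  { unfold error. rewrite CsumC_scal, CsumC_add. apply CsumC_ext. intros k hk0.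
    destruct (Nat.eq_dec k i) as [->|hki].
    - unfold head. rewrite Nat.eqb_refl. destruct (Nat.ltb i i) eqn:e; [apply Nat.ltb_lt in e; lia|]. ring.
    - rewrite summand_split by auto. apply Nat.eqb_neq in hki. rewrite hki. reflexivity. }
  rewrite h1, head_sum, sum_ind_lt.
  replace (Nat.min (n - 1) (i - 1)) with (i - 1)%nat by lia.
  destruct (Nat.leb i (n - 1)) eqn:e; [|apply Nat.leb_gt in e; lia].
  assert (ht := telescope n d i ltac:(lia)).
  assert (hS : sum1 (fun k => (-1) ^ (n - k) * INR (Dd d k)) (i - 1) =
               - (sgn * INR (d i)) - (-1) ^ n * INR (d 1%nat)) by (unfold sgn; lra).
  rewrite hS. unfold summand. fold sgn.
  rewrite !RtoC_minus, !RtoC_opp, !RtoC_mult. unfold Cdiv. ring.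
Qed.
End Decomposition.


Lemma root_ratio_bounds (K e1 e2 r : R) (D : nat) : 2 <= e1 <= K -> 2 <= e2 <= K ->
  (4 <= D)%nat -> 0 < r -> r ^ D = e1 / e2 -> 2 / K <= r ^ 4 <= K / 2.
Proof.
  intros he1 he2 hD hr hrD.
  assert (hlo : 2 / K <= e1 / e2).
  { apply (Rmult_le_reg_r (K * e2)). nra. unfold Rdiv.
    replace (2 * / K * (K * e2)) with (2 * e2) by (field; lra).
    replace (e1 * / e2 * (K * e2)) with (e1 * K) by (field; lra). nra. }
  assert (hhi : e1 / e2 <= K / 2).
  { apply (Rmult_le_reg_r (2 * e2)). nra. unfold Rdiv.
    replace (e1 * / e2 * (2 * e2)) with (2 * e1) by (field; lra).
    replace (K * / 2 * (2 * e2)) with (K * e2) by (field; lra). nra. }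
  destruct (Rle_dec 1 r).
  - assert (r ^ 4 <= r ^ D) by (apply Rle_pow; auto).
    assert (1 <= r ^ 4) by (apply pow_R1_Rle; auto).
    assert (2 / K <= 1) by (apply (Rmult_le_reg_r K); [lra|]; unfold Rdiv; rewrite Rmult_assoc, Rinv_l; lra).
    lra.
  - assert (r ^ D <= r ^ 4) by (apply pow_le_exp; auto; lra).
    assert (r ^ 4 <= 1) by (apply pow_le1; lra).
    lra.
Qed.

Section Main.
Variables (p n : nat) (d : nat -> nat) (s : R) (a : nat -> Defs.Cplx).
Hypothesis hp : p = 0%nat \/ p = 1%nat.
Hypothesis hn : (2 <= n)%nat.
Hypothesis hd : forall i, (1 <= i <= n)%nat -> (0 < d i)%nat.
Hypothesis hxi : xi d n < 1.
Hypothesis hs : s_admissible p d n s.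
Hypothesis Ha1 : Defs.Cmod (a (n - 1)%nat) = Rpower (v_par p d n s) (/ INR (d n)).
Hypothesis Ha2 : forall i, (1 <= i <= n - 2)%nat ->
     Defs.Cmod (a i) = Rpower (u_par p d n s) (/ INR (d (S i))) * Defs.Cmod (a (S i)).

Let kR := INR (Kmax d n).
Let t := Rpower (u_par p d n s) (/ kR).

Lemma t_small : 0 < t /\ t ^ 2 * kR ^ 4 <= 1 /\ t * kR ^ 2 <= 1 /\ 3 <= kR.
Proof.
  destruct (t_facts p n d s hp hn hd hxi hs) as [ht0 [htK _]]. fold kR t in ht0, htK.
  assert (hK := K_ge3 p n d hp hn hd hxi). fold kR in hK.
  repeat split; auto.
  assert (0 <= t * kR ^ 2) by (assert (0 < kR^2) by nra; nra).
  assert ((t * kR ^ 2) ^ 2 <= 1) by (replace ((t * kR ^ 2) ^ 2) with (t ^ 2 * kR ^ 4) by ring; auto).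
  nra.
Qed.

Lemma modulus_posC k : (1 <= k <= n - 1)%nat -> 0 < Cmod (toC (a k)).
Proof. intros; rewrite <- toC_mod; eapply modulus_pos; eauto. Qed.

Lemma modulus_gapC k l : (1 <= k < l)%nat -> (l <= n - 1)%nat ->
  Cmod (toC (a k)) <= t * Cmod (toC (a l)).
Proof. intros; rewrite <- !toC_mod; eapply modulus_gap; eauto. Qed.

Lemma index_facts i : (1 <= i <= n - 1)%nat ->
  2 <= INR (d i) <= kR /\ 2 <= INR (d (S i)) <= kR /\
  INR (Dd d i) = INR (d i) + INR (d (S i)) /\ (4 <= Dd d i)%nat.
Proof.
  intros hi.
  assert (h1 := exponent_ge2 p n d hp hn hd hxi i ltac:(lia)).
  assert (h2 := exponent_ge2 p n d hp hn hd hxi (S i) ltac:(lia)).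
  assert (h3 := exponent_leK n d i ltac:(lia)). assert (h4 := exponent_leK n d (S i) ltac:(lia)).
  unfold kR. repeat split; try (apply le_INR; auto); try (replace 2 with (INR 2) by (simpl; ring); apply le_INR; auto).
  - unfold Dd. apply plus_INR.
  - unfold Dd. lia.
Qed.

Lemma r_facts i : (1 <= i <= n - 1)%nat ->
  0 < r_i d i /\ r_i d i ^ Dd d i = INR (d i) / INR (d (S i)) /\
  2 / kR <= r_i d i ^ 4 <= kR / 2.
Proof.
  intros hi. destruct (index_facts i hi) as [he1 [he2 [_ hD4]]].
  assert (hr : 0 < r_i d i) by apply Rpower_pos.
  assert (hrD : r_i d i ^ Dd d i = INR (d i) / INR (d (S i))).
  { unfold r_i. rewrite <- Rpower_pow by apply Rpower_pos. rewrite Rpower_mult.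
    rewrite Rinv_l by (apply not_0_INR; lia). apply Rpower_1. apply Rdiv_lt_0_compat; lra. }
  assert (h4 := root_ratio_bounds kR _ _ _ (Dd d i) he1 he2 hD4 hr hrD). tauto.
Qed.

Lemma wtilde_facts i j : (1 <= i <= n - 1)%nat ->
  Cmod (toC (wtilde d a i j)) = r_i d i * Cmod (toC (a i)) /\
  (toC (wtilde d a i j) ^ Dd d i = - RtoC (INR (d i) / INR (d (S i))) * toC (a i) ^ Dd d i)%C.
Proof.
  intros hi. destruct (r_facts i hi) as [hr [hrD _]].
  destruct (index_facts i hi) as [_ [_ [_ hD4]]].
  assert (hDp : 0 < INR (Dd d i)) by (apply lt_0_INR; lia).
  unfold wtilde. rewrite !toC_mul, toC_RtoC, toC_expi.
  split.
  - rewrite !Cmod_mult, Cmod_R, Rabs_right, Cmod_cexp by lra. ring.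
  - rewrite !Cpow_mult_l, cexp_pow, <- RtoC_pow, hrD.
    replace (INR (Dd d i) * (PI * (2 * INR j - 1) / INR (Dd d i))) with (- PI + 2 * INR j * PI) by (field; lra).
    rewrite cos_period, sin_period, cos_neg, sin_neg, cos_PI, sin_PI, Ropp_0.
    replace ((- 1, 0) : C) with (- RtoC 1)%C by (unfold Copp, RtoC; simpl; f_equal; ring).
    ring.
Qed.

Lemma is_crit_ofC i (z : C) : (1 <= i <= n - 1)%nat -> z <> 0%C ->
  (forall k, (1 <= k <= n - 1)%nat -> (z ^ Dd d k <> toC (a k) ^ Dd d k)%C) ->
  (RtoC (INR (Dd d i)) * z ^ Dd d i / (z ^ Dd d i - toC (a i) ^ Dd d i) - RtoC (INR (d i)) +
   error (n - 1) i (Dd d) (fun k => toC (a k)) (fun k => ((-1) ^ (n - k) * (-1) ^ (n - i))%R) z = 0)%C ->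
  is_crit d n a (ofC z).
Proof.
  intros hi hz0 hzk heq. split; [|split].
  - intro e. apply hz0. rewrite <- (toC_ofC z), e. reflexivity.
  - intros k hk e. apply (f_equal toC) in e. rewrite !toC_pow, toC_ofC in e. exact (hzk k hk e).
  - apply toC_inj. unfold crit_lhs. rewrite toC_add, toC_sum, toC_RtoC.
    erewrite CsumC_ext.
    + rewrite (decomposition n i d (fun k => toC (a k)) hi z) by auto. rewrite heq, Cmult_0_r. reflexivity.
    + intros k hk. rewrite toC_div, toC_mul, toC_RtoC, toC_sub, !toC_pow, toC_ofC. reflexivity.
Qed.

Lemma critical_point_near i j : (1 <= i <= n - 1)%nat -> (1 <= j <= Dd d i)%nat ->
  exists z, is_crit d n a z /\ Defs.Cmod (Defs.Csub z (wtilde d a i j)) <= 3/4 * t ^ 2 * Defs.Cmod (a i).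
Proof.
  intros hi hj.
  destruct (r_facts i hi) as [hr [_ hr4]].
  destruct (wtilde_facts i j hi) as [hw0 hw0D].
  destruct t_small as [ht0 [htK [_ hK]]].
  destruct (index_facts i hi) as [he1 [he2 [hD _]]].
  assert (hN : INR (n - 1) <= kR) by (unfold kR; apply le_INR; assert (h := n_ltK p n d hp hn hd hxi); lia).
  destruct (perturbed_root (n - 1) i (Dd d i) (Dd d) (fun k => toC (a k))
              (fun k => (-1) ^ (n - k) * (-1) ^ (n - i))
              (INR (d i)) (INR (d (S i))) kR t (Cmod (toC (a i))) (r_i d i) (toC (wtilde d a i j)))
    as [z [hz [hz0 [hzk [hzi heq]]]]]; auto; try lra.
  - apply modulus_posC; lia.
  - intros k hk _. apply (index_facts k). lia.
  - intros k hk. apply modulus_gapC; lia.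
  - intros k hk. apply modulus_gapC; lia.
  - intros k. rewrite Rabs_mult, !pow_1_abs. ring.
  - exists (ofC z). split.
    + apply (is_crit_ofC i); auto.
      intros k hk. destruct (Nat.eq_dec k i) as [->|hki]; auto.
    + rewrite !toC_mod, toC_sub, toC_ofC. exact hz.
Qed.


(* Separation in i: for ia < ib the disk around w~_{ia,ja} lies in
   |z| <= (K/2 + t^2) t |a_ib| while the one around w~_{ib,jb} lies in
   |z| >= (2/K - t^2) |a_ib|. *)
Lemma disks_disjoint_i ia ja ib jb (z : C) : (1 <= ia < ib)%nat -> (ib <= n - 1)%nat ->
  Cmod (z - toC (wtilde d a ia ja)) <= 3/4 * t ^ 2 * Cmod (toC (a ia)) ->
  Cmod (z - toC (wtilde d a ib jb)) <= 3/4 * t ^ 2 * Cmod (toC (a ib)) -> False.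
Proof.
  intros hab hb hza hzb.
  destruct t_small as [ht0 [_ [htK hK]]].
  destruct (r_facts ia ltac:(lia)) as [hra [_ hra4]].
  destruct (r_facts ib ltac:(lia)) as [hrb [_ hrb4]].
  assert (hra' := r_between kR (r_i d ia) hK hra hra4).
  assert (hrb' := r_between kR (r_i d ib) hK hrb hrb4).
  destruct (wtilde_facts ia ja ltac:(lia)) as [hwa _].
  destruct (wtilde_facts ib jb ltac:(lia)) as [hwb _].
  assert (hrho := modulus_gapC ia ib ltac:(lia) hb).
  assert (hpb := modulus_posC ib ltac:(lia)).
  set (ra := r_i d ia) in *. set (rb := r_i d ib) in *.
  set (pa := Cmod (toC (a ia))) in *. set (pb := Cmod (toC (a ib))) in *.
  assert (hpa : 0 <= pa) by apply Cmod_ge_0.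
  assert (hz1 : Cmod z <= ra * pa + 3/4 * t ^ 2 * pa).
  { assert (h := Cmod_triangle (z - toC (wtilde d a ia ja)) (toC (wtilde d a ia ja))).
    replace (z - toC (wtilde d a ia ja) + toC (wtilde d a ia ja))%C with z in h by ring. lra. }
  assert (hz2 : rb * pb - 3/4 * t ^ 2 * pb <= Cmod z).
  { assert (h := Cmod_rev (toC (wtilde d a ib jb)) z). rewrite Cmod_sub_sym in h. lra. }
  assert (hkt : t * kR <= / 3).
  { apply (Rmult_le_reg_r kR); [lra|]. assert (1 <= /3 * kR) by lra. nra. }
  assert (ht9 : t <= / 9).
  { apply (Rmult_le_reg_r (kR * kR)). nra. assert (1 <= /9 * (kR * kR)) by nra. nra. }
  assert (hab' : (ra + 3/4 * t ^ 2) * pa <= (kR / 2 + 3/4 * t ^ 2) * (t * pb))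
    by (apply Rmult_le_compat; nra).
  assert (hrbK : 2 <= rb * kR) by (destruct hrb' as [h _]; assert (2 / kR * kR = 2) by (field; lra); nra).
  assert (hmain : rb - 3/4 * t ^ 2 <= (kR / 2 + 3/4 * t ^ 2) * t).
  { apply (Rmult_le_reg_r pb); auto. nra. }
  assert (h5 : (rb - 3/4 * t ^ 2) * kR <= (kR / 2 + 3/4 * t ^ 2) * t * kR) by (apply Rmult_le_compat_r; lra).
  assert (t ^ 2 * kR <= / 27) by (simpl; nra).
  assert (t * t ^ 2 * kR <= / 27) by (simpl; nra).
  assert (kR * t * kR <= 1) by nra.
  nra.
Qed.

(* For fixed i, distinct points w~_{i,ja}, w~_{i,jb} are at distance at
   least r_i |a_i| * 3 / (2K) (angles at least 2 pi / D_i apart). *)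
Lemma wtilde_angle_gap i ja jb : (1 <= i <= n - 1)%nat -> (1 <= jb)%nat -> (jb < ja)%nat -> (ja <= Dd d i)%nat ->
  r_i d i * Cmod (toC (a i)) * (3 / (2 * kR)) <=
  Cmod (toC (wtilde d a i ja) - toC (wtilde d a i jb)).
Proof.
  intros hi h1 h12 h2.
  destruct t_small as [_ [_ [_ hK]]].
  destruct (r_facts i hi) as [hr _].
  destruct (index_facts i hi) as [he1 [he2 [hD hD4]]].
  assert (hD0 : 4 <= INR (Dd d i)) by (replace 4 with (INR 4) by (simpl; ring); apply le_INR; auto).
  set (th := fun j => PI * (2 * INR j - 1) / INR (Dd d i)).
  assert (e : (toC (wtilde d a i ja) - toC (wtilde d a i jb) =
     RtoC (r_i d i) * toC (a i) * (((cos (th ja), sin (th ja)) : C) - (cos (th jb), sin (th jb))))%C).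
  { unfold wtilde. rewrite !toC_mul, !toC_RtoC, !toC_expi. unfold th. ring. }
  rewrite e, !Cmod_mult, Cmod_R, Rabs_right by lra.
  set (X := Cmod (((cos (th ja), sin (th ja)) : C) - (cos (th jb), sin (th jb)))).
  assert (hX2 : 9 / INR (Dd d i) ^ 2 <= X ^ 2).
  { unfold X. rewrite cexp_dist. apply angle_separation; auto. }
  assert (hX0 : 0 <= X) by apply Cmod_ge_0.
  assert (hX : 3 / INR (Dd d i) <= X).
  { destruct (Rle_dec (3 / INR (Dd d i)) X); auto.
    assert (0 < 3 / INR (Dd d i)) by (apply Rdiv_lt_0_compat; lra).
    assert (X ^ 2 < (3 / INR (Dd d i)) ^ 2) by (simpl; nra).
    replace (9 / INR (Dd d i) ^ 2) with ((3 / INR (Dd d i)) ^ 2) in hX2 by (field; lra). lra. }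
  assert (hX' : 3 / (2 * kR) <= X).
  { eapply Rle_trans; [|exact hX]. apply Rmult_le_compat_l; [lra|]. apply Rinv_le_contravar; lra. }
  apply Rmult_le_compat_l; auto. apply Rmult_le_pos; [lra|apply Cmod_ge_0].
Qed.

(* Separation in j: the gap exceeds the sum of the two radii. *)
Lemma disks_disjoint_j i ja jb (z : C) : (1 <= i <= n - 1)%nat -> (1 <= jb)%nat -> (jb < ja)%nat -> (ja <= Dd d i)%nat ->
  Cmod (z - toC (wtilde d a i ja)) <= 3/4 * t ^ 2 * Cmod (toC (a i)) ->
  Cmod (z - toC (wtilde d a i jb)) <= 3/4 * t ^ 2 * Cmod (toC (a i)) -> False.
Proof.
  intros hi h1 h12 h2 hza hzb.
  destruct t_small as [ht0 [_ [htK hK]]].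
  destruct (r_facts i hi) as [hr [_ hr4]].
  assert (hr' := r_between kR (r_i d i) hK hr hr4).
  assert (hpp := modulus_posC i hi).
  assert (hgap := wtilde_angle_gap i ja jb hi h1 h12 h2).
  assert (hdist : Cmod (toC (wtilde d a i ja) - toC (wtilde d a i jb)) <= 3/2 * t ^ 2 * Cmod (toC (a i))).
  { assert (h := Cmod_tri3 (toC (wtilde d a i ja)) z (toC (wtilde d a i jb))).
    rewrite (Cmod_sub_sym (toC (wtilde d a i ja)) z) in h. lra. }
  set (r := r_i d i) in *. set (pp := Cmod (toC (a i))) in *.
  assert (hrX : r * (3 / (2 * kR)) <= 3/2 * t ^ 2).
  { apply (Rmult_le_reg_r pp); auto. nra. }
  assert (hr2 : 2 <= r * kR) by (destruct hr' as [h _]; assert (2 / kR * kR = 2) by (field; lra); nra).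
  replace (r * (3 / (2 * kR))) with (3 / 2 * (r * kR) / kR ^ 2) in hrX by (field; lra).
  assert (3 / 2 * 2 / kR ^ 2 <= 3 / 2 * (r * kR) / kR ^ 2).
  { unfold Rdiv. apply Rmult_le_compat_r. left; apply Rinv_0_lt_compat; nra. nra. }
  assert (t ^ 2 * kR ^ 2 <= / 9).
  { assert (t * kR ^ 2 * t <= t) by nra. assert (t <= / 9).
    { apply (Rmult_le_reg_r (kR ^ 2)). nra. assert (1 <= / 9 * kR ^ 2) by nra. nra. }
    simpl; nra. }
  assert (3 / 2 * 2 / kR ^ 2 * kR ^ 2 = 3) by (field; lra).
  assert (3 <= 3 / 2 * t ^ 2 * kR ^ 2) by (assert (0 < kR ^ 2) by nra; nra).
  nra.
Qed.

Lemma disks_disjoint i1 j1 i2 j2 (z : Defs.Cplx) :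
  (1 <= i1 <= n - 1)%nat -> (1 <= j1 <= Dd d i1)%nat ->
  (1 <= i2 <= n - 1)%nat -> (1 <= j2 <= Dd d i2)%nat ->
  Defs.Cmod (Defs.Csub z (wtilde d a i1 j1)) <= 3/4 * t ^ 2 * Defs.Cmod (a i1) ->
  Defs.Cmod (Defs.Csub z (wtilde d a i2 j2)) <= 3/4 * t ^ 2 * Defs.Cmod (a i2) ->
  i1 = i2 /\ j1 = j2.
Proof.
  intros hi1 hj1 hi2 hj2 h1 h2.
  rewrite !toC_mod, toC_sub in h1, h2.
  destruct (Compare_dec.lt_eq_lt_dec i1 i2) as [[hlt|heq]|hgt].
  - exfalso. apply (disks_disjoint_i i1 j1 i2 j2 (toC z)); auto; lia.
  - subst i2. split; auto.
    destruct (Compare_dec.lt_eq_lt_dec j1 j2) as [[hlt|heq]|hgt]; auto.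
    + exfalso. apply (disks_disjoint_j i1 j2 j1 (toC z)); auto; lia.
    + exfalso. apply (disks_disjoint_j i1 j1 j2 (toC z)); auto; lia.
  - exfalso. apply (disks_disjoint_i i2 j2 i1 j1 (toC z)); auto; lia.
Qed.

End Main.
End Analysis.

Theorem lemma2p3 (p n : nat) (d : nat -> nat) (s : R) (a : nat -> Cplx) :
  (p = 0%nat \/ p = 1%nat) ->
  (2 <= n)%nat ->
  (forall i, (1 <= i <= n)%nat -> (0 < d i)%nat) ->
  xi d n < 1 ->
  s_admissible p d n s ->
  Cmod (a (n - 1)%nat) = Rpower (v_par p d n s) (/ INR (d n)) ->
  (forall i, (1 <= i <= n - 2)%nat ->
     Cmod (a i) = Rpower (u_par p d n s) (/ INR (d (S i))) * Cmod (a (S i))) ->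
  exists w : nat -> nat -> Cplx,
    (forall i j, (1 <= i <= n - 1)%nat -> (1 <= j <= Dd d i)%nat ->
       is_crit d n a (w i j) /\
       Cmod (Csub (w i j) (wtilde d a i j)) <
         Rpower (u_par p d n s) (2 / INR (Kmax d n)) * Cmod (a i)) /\
    (forall i1 j1 i2 j2,
       (1 <= i1 <= n - 1)%nat -> (1 <= j1 <= Dd d i1)%nat ->
       (1 <= i2 <= n - 1)%nat -> (1 <= j2 <= Dd d i2)%nat ->
       (w i1 j1 = w i2 j2 <-> (i1 = i2 /\ j1 = j2))).
Proof.
  intros hp hn hd hxi hs Ha1 Ha2.
  set (t := Rpower (u_par p d n s) (/ INR (Kmax d n))).
  destruct (choice_on_indices (fun i j => (1 <= i <= n - 1)%nat /\ (1 <= j <= Dd d i)%nat)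
     (fun i j z => is_crit d n a z /\ Cmod (Csub z (wtilde d a i j)) <= 3/4 * t ^ 2 * Cmod (a i)) C0)
    as [w hw].
  { intros i j [hi hj]. exact (Analysis.critical_point_near p n d s a hp hn hd hxi hs Ha1 Ha2 i j hi hj). }
  destruct (t_facts p n d s hp hn hd hxi hs) as [ht0 [_ [htu _]]]. fold t in ht0, htu.
  exists w. split.
  - (* the disk radius (3/4) t^2 |a_i| is below u^{2/K} |a_i| = t^2 |a_i| *)
    intros i j hi hj. destruct (hw i j (conj hi hj)) as [hc hb]. split; auto.
    rewrite htu. assert (0 < Cmod (a i)) by (eapply modulus_pos; eauto).
    assert (0 < t ^ 2) by (apply pow_lt; auto). nra.
  -
    intros i1 j1 i2 j2 hi1 hj1 hi2 hj2. split; [|intros [-> ->]; reflexivity].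
    intros e. destruct (hw i1 j1 (conj hi1 hj1)) as [_ hb1]. destruct (hw i2 j2 (conj hi2 hj2)) as [_ hb2].
    rewrite e in hb1. eapply (Analysis.disks_disjoint p n d s a); eauto.
Qed.
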